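(* Let $\rho>0$, $\theta\ge0$, let $\mathfrak{L}\in C^2[A,\infty)$ with $\lim_{u\to\infty}\mathfrak L(u)=\infty$ and $\mathfrak L'\in NRV_{-1}$, let $\boldsymbol L_f$ be a normalised slowly varying function, and let $\mathfrak K\in NRV_\theta(0+)$ (nondecreasing near $0$ if $\theta=0$). Then there is $\beta>0$ such that $\Phi:(0,\beta)\to\mathbb{R}$ is well defined by \[\int_{\Phi(t)}^\infty \frac{[\mathfrak{L}'(y)]^{1/2}}{y^{\frac{\rho+1}{2}}[\boldsymbol{L}_f(y)]^{1/2}}\,dy=\int_0^t\mathfrak{K}(s)\,ds,\qquad t\in(0,\beta),\] and $\Phi\in C^2(0,\beta)$, $\lim_{t\to0^+}\Phi(t)=\infty$, $\Phi\in NRV_{-2(\theta+1)/\rho}(0+)$. Moreover, for every integer $m\ge1$, \[\lim_{t\to0^+}\frac{\log_m\Phi(t)}{\log_m(1/t)}=\begin{cases}\frac{2(1+\theta)}{\rho},& m=1,\\1,&m\ge2,\end{cases}\] and \[\lim_{t\to0^+}\frac{\Phi(t)\Phi''(t)}{[\Phi'(t)]^2}=1+\frac{\rho}{2(\theta+1)},\qquad \lim_{t\to0^+}\frac{\mathfrak L(\Phi(t))}{\mathfrak L'(\Phi(t))}\cdot\frac{\Phi(t)}{[\Phi'(t)]^2}=0.\]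
   Context: $\log_m$ is the $m$-fold iterate of $\log$. A normalised slowly varying function is a positive $C^1$ function $\widehat L$ on some $[B,\infty)$ with $\lim_{u\to\infty}u\widehat L'(u)/\widehat L(u)=0$. $R\in NRV_\rho$ means $R(u)=u^\rho\widehat L(u)$ for a normalised slowly varying $\widehat L$. $\mathfrak K\in NRV_\theta(0+)$ (resp. $\Phi\in NRV_\gamma(0+)$) means $u\mapsto\mathfrak K(1/u)\in NRV_{-\theta}$ (resp. $u\mapsto\Phi(1/u)\in NRV_{-\gamma}$). *)

From Stdlib Require Import Reals.
From Coquelicot Require Import Coquelicot.
Open Scope R_scope.

Definition log_iter (m : nat) (x : R) : R := Nat.iter m ln x.

Definition NSV_on (B : R) (L : R -> R) : Prop :=
  (forall u, B < u -> 0 < L u) /\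
  (forall u, B < u -> ex_derive L u /\ continuous (Derive L) u) /\
  is_lim (fun u => u * Derive L u / L u) p_infty 0.

Definition NSV (L : R -> R) : Prop := exists B, NSV_on B L.

Definition NRV (rho : R) (F : R -> R) : Prop :=
  exists B Lhat, NSV_on B Lhat /\ forall u, B < u -> F u = Rpower u rho * Lhat u.

(* K in NRV_theta(0+) : u |-> K(1/u) in NRV_{-theta} *)
Definition NRV0 (theta : R) (K : R -> R) : Prop :=
  NRV (- theta) (fun u => K (/ u)).

Definition C2_on (a : R) (b : Rbar) (f : R -> R) : Prop :=
  forall u, a < u -> Rbar_lt u b ->
    ex_derive f u /\ ex_derive (Derive f) u /\ continuous (Derive (Derive f)) u.

Definition integrand (rho : R) (LL Lf : R -> R) (x : R) : R :=
  sqrt (Derive LL x) / (Rpower x ((rho + 1) / 2) * sqrt (Lf x)).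

Definition defining_eq (rho : R) (LL Lf K : R -> R) (y t : R) : Prop :=
  exists I : R,
    is_RInt_gen (integrand rho LL Lf) (at_point y) (Rbar_locally p_infty) I /\
    is_RInt_gen K (at_right 0) (at_point t) I.

(** Both sides of the defining equation are tail integrals of normalised regularly
    varying functions: the integrand [g] has index [-(1 + rho/2)] at infinity, and
    [int_0^t K = int_(1/t)^oo K (1/v) / v^2 dv] where the new integrand has index
    [-(theta + 2)]. Calling them [G y] and [H t], Karamata's theorem gives
    [G y ~ y g y / (rho/2)] and [H t ~ t K t / (theta + 1)], and [Phi := G^-1 o H] is well
    defined and [C^2] by the inverse function theorem. Hence
    [Phi t g (Phi t) / (t K t) -> rho / (2 (theta + 1))]; since [Phi' = - K / g (Phi)] this
    ratio is [- Phi / (t Phi')], which gives the elasticity of [Phi] at [0+], hence its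
    index and the iterated-logarithm limits, and, together with the indices of [K] and [g],
    the limit of [Phi Phi'' / Phi'^2]. For the last limit, [LL' in NRV_-1] forces
    [LL y <= y^(1 + p) LL' y] for every [p > 0], while [Phi] grows at most polynomially
    in [1/t]. *)
From Stdlib Require Import Reals Lra Lia ClassicalEpsilon.
From Coquelicot Require Import Coquelicot.
Open Scope R_scope.

Section Limits.
Context {T : Type} {F : (T -> Prop) -> Prop} {FF : Filter F}.

Lemma lim_plus (f g : T -> R) a b :
  filterlim f F (locally a) -> filterlim g F (locally b) ->
  filterlim (fun x => f x + g x) F (locally (a + b)).
Proof.
  intros Hf Hg. eapply filterlim_comp_2; [exact Hf|exact Hg|].
  apply (filterlim_plus a b).
Qed.

Lemma lim_mult (f g : T -> R) a b :
  filterlim f F (locally a) -> filterlim g F (locally b) ->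
  filterlim (fun x => f x * g x) F (locally (a * b)).
Proof.
  intros Hf Hg. eapply filterlim_comp_2; [exact Hf|exact Hg|].
  apply (filterlim_mult a b).
Qed.

Lemma lim_const (c : R) : filterlim (fun _ : T => c) F (locally c).
Proof. apply filterlim_const. Qed.

Lemma lim_opp (f : T -> R) a :
  filterlim f F (locally a) -> filterlim (fun x => - f x) F (locally (- a)).
Proof. intros Hf. eapply filterlim_comp; [exact Hf|]. apply (filterlim_opp a). Qed.

Lemma lim_inv (f : T -> R) a : a <> 0 ->
  filterlim f F (locally a) -> filterlim (fun x => / f x) F (locally (/ a)).
Proof.
  intros Ha Hf. eapply filterlim_comp; [exact Hf|].
  apply (filterlim_Rbar_inv (Finite a)). intro H; apply Ha. injection H; auto.
Qed.

Lemma lim_div (f g : T -> R) a b : b <> 0 ->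
  filterlim f F (locally a) -> filterlim g F (locally b) ->
  filterlim (fun x => f x / g x) F (locally (a / b)).
Proof. intros Hb Hf Hg. apply lim_mult; auto. apply lim_inv; auto. Qed.

Lemma lim_ext (f g : T -> R) l :
  F (fun x => f x = g x) -> filterlim f F l -> filterlim g F l.
Proof. intros. eapply filterlim_ext_loc; eauto. Qed.

End Limits.

Lemma cont_plus (f g : R -> R) x : continuous f x -> continuous g x ->
  continuous (fun y => f y + g y) x.
Proof. intros; apply (continuous_plus f g); auto. Qed.
Lemma cont_mult (f g : R -> R) x : continuous f x -> continuous g x ->
  continuous (fun y => f y * g y) x.
Proof. intros; apply (continuous_mult f g); auto. Qed.
Lemma cont_opp (f : R -> R) x : continuous f x -> continuous (fun y => - f y) x.
Proof. intros; apply (continuous_opp f); auto. Qed.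
Lemma cont_inv (f : R -> R) x : continuous f x -> f x <> 0 -> continuous (fun y => / f y) x.
Proof. intros; apply continuous_Rinv_comp; auto. Qed.

Lemma ex_derive_continuous_R (f : R -> R) x : ex_derive f x -> continuous f x.
Proof. intros H. apply (ex_derive_continuous (K:=R_AbsRing) (V:=R_NormedModule)); auto. Qed.

Lemma is_derive_continuity_pt (f : R -> R) x l : is_derive f x l -> continuity_pt f x.
Proof.
  intros H. apply continuity_pt_filterlim. apply ex_derive_continuous_R. exists l; auto.
Qed.

Lemma is_derive_plus_R (f g : R -> R) x df dg : is_derive f x df -> is_derive g x dg ->
  is_derive (fun t => f t + g t) x (df + dg).
Proof. intros; apply (is_derive_plus (K:=R_AbsRing) (V:=R_NormedModule)); auto. Qed.
Lemma is_derive_minus_R (f g : R -> R) x df dg : is_derive f x df -> is_derive g x dg ->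
  is_derive (fun t => f t - g t) x (df - dg).
Proof. intros; apply (is_derive_minus (K:=R_AbsRing) (V:=R_NormedModule)); auto. Qed.

Lemma locally_gt (b y : R) : b < y -> locally y (fun z => b < z).
Proof. intros H. apply (open_gt b). exact H. Qed.
Lemma locally_lt (b y : R) : y < b -> locally y (fun z => z < b).
Proof. intros H. apply (open_lt b). exact H. Qed.
Lemma locally_between (a b y : R) : a < y < b -> locally y (fun z => a < z < b).
Proof. intros H. apply filter_and; [apply locally_gt|apply locally_lt]; lra. Qed.

Lemma at_right_lt (c : R) : 0 < c -> at_right 0 (fun t => 0 < t < c).
Proof.
  intros Hc. exists (mkposreal c Hc). intros t Ht Ht0. change (Rabs (t - 0) < c) in Ht.
  rewrite Rminus_0_r in Ht. apply Rabs_def2 in Ht. lra.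
Qed.

Lemma filterlim_Rinv_p_infty_right : filterlim Rinv (Rbar_locally p_infty) (at_right 0).
Proof.
  intros P [eps HP]. exists (/ eps). intros u Hu.
  assert (Hpe := cond_pos eps).
  assert (Hu0 : 0 < u) by (assert (0 < / eps) by (apply Rinv_0_lt_compat; auto); lra).
  apply HP.
  - change (Rabs (/ u - 0) < eps). rewrite Rminus_0_r, Rabs_right.
    + rewrite <- (Rinv_inv eps). apply Rinv_lt_contravar; auto.
      apply Rmult_lt_0_compat; auto. apply Rinv_0_lt_compat; auto.
    + left; apply Rinv_0_lt_compat; auto.
  - apply Rinv_0_lt_compat; auto.
Qed.

Lemma Rinv_lt_of_lt_Rinv (b t : R) : 0 < b -> 0 < t < / b -> b < / t.
Proof.
  intros Hb Ht. rewrite <- (Rinv_inv b). apply Rinv_lt_contravar; [|lra].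
  apply Rmult_lt_0_compat; lra.
Qed.

Lemma is_lim_eventually_gt (f : R -> R) C : is_lim f p_infty p_infty ->
  Rbar_locally' p_infty (fun y => C < f y).
Proof. intros H. apply (H (fun z => C < z)). exists C; auto. Qed.

Lemma is_lim_eventually_ball (f : R -> R) (l : R) eps : is_lim f p_infty l -> 0 < eps ->
  exists M, forall y, M < y -> Rabs (f y - l) < eps.
Proof.
  intros H He. destruct (H (fun z => Rabs (z - l) < eps)) as [M HM].
  { exists (mkposreal eps He). intros z Hz. exact Hz. }
  exists M; auto.
Qed.

Lemma is_lim_of_eps (h : R -> R) (l : R) :
  (forall eps, 0 < eps -> exists M, forall x, M < x -> Rabs (h x - l) <= eps) ->
  is_lim h p_infty l.
Proof.
  intros H P [e He]. destruct (H (e/2)) as [M HM]. { destruct e; simpl; lra. }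
  exists M. intros x Hx. apply He. generalize (HM x Hx). destruct e; simpl.
  intros; change (Rabs (h x - l) < pos). lra.
Qed.

Lemma is_lim_le_const (h : R -> R) (l c : R) :
  Rbar_locally' p_infty (fun y => h y <= c) -> is_lim h p_infty l -> l <= c.
Proof. intros H1 H2. exact (is_lim_le_loc _ _ p_infty l c H1 H2 (is_lim_const c p_infty)). Qed.

Lemma is_lim_ge_const (h : R -> R) (l c : R) :
  Rbar_locally' p_infty (fun y => c <= h y) -> is_lim h p_infty l -> c <= l.
Proof. intros H1 H2. exact (is_lim_le_loc _ _ p_infty c l H1 (is_lim_const c p_infty) H2). Qed.

Lemma is_lim_Rpower_p_infty p : 0 < p -> is_lim (fun y => Rpower y p) p_infty p_infty.
Proof.
  intros Hp. unfold Rpower.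
  apply (is_lim_comp exp (fun y => p * ln y) p_infty p_infty p_infty).
  - apply is_lim_exp_p.
  - assert (H := is_lim_scal_l ln p p_infty p_infty is_lim_ln_p).
    simpl in H. destruct (Rle_dec 0 p) as [H0|H0]; [|lra].
    destruct (Rle_lt_or_eq_dec 0 p H0) as [H1|H1]; [exact H|lra].
  - exists 0; intros; discriminate.
Qed.

Lemma is_lim_Rpower_neg p : 0 < p -> is_lim (fun y => Rpower y (-p)) p_infty 0.
Proof.
  intros Hp. apply (is_lim_ext (fun y => / Rpower y p)).
  { intros y. rewrite Rpower_Ropp; auto. }
  apply (is_lim_inv _ _ p_infty); [apply is_lim_Rpower_p_infty; auto|discriminate].
Qed.

Lemma Rpower_pos x a : 0 < Rpower x a.
Proof. apply exp_pos. Qed.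

Lemma Rpower_m2 v : 0 < v -> Rpower v (Ropp 2) = / (v * v).
Proof.
  intros Hv. rewrite Rpower_Ropp. f_equal. unfold Rpower.
  replace (2 * ln v) with (ln v + ln v) by ring. rewrite exp_plus, exp_ln; auto.
Qed.

Lemma nonincr_of_derive_nonpos (f df : R -> R) a b : a <= b ->
  (forall x, a <= x <= b -> is_derive f x (df x)) ->
  (forall x, a <= x <= b -> df x <= 0) -> f b <= f a.
Proof.
  intros Hab Hd Hs. destruct (Req_dec a b) as [<-|Hne]; [lra|].
  destruct (MVT_gen f a b df) as (c & Hc & He).
  - intros x Hx. apply Hd. rewrite Rmin_left, Rmax_right in Hx; lra.
  - intros x Hx. rewrite Rmin_left, Rmax_right in Hx by lra.
    eapply is_derive_continuity_pt. apply Hd; lra.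
  - rewrite Rmin_left, Rmax_right in Hc by lra.
    assert (df c <= 0) by (apply Hs; lra). nra.
Qed.

Lemma decr_of_derive_neg (f df : R -> R) a b : a < b ->
  (forall x, a <= x <= b -> is_derive f x (df x)) ->
  (forall x, a <= x <= b -> df x < 0) -> f b < f a.
Proof.
  intros Hab Hd Hs.
  destruct (MVT_gen f a b df) as (c & Hc & He).
  - intros x Hx. apply Hd. rewrite Rmin_left, Rmax_right in Hx; lra.
  - intros x Hx. rewrite Rmin_left, Rmax_right in Hx by lra.
    eapply is_derive_continuity_pt. apply Hd; lra.
  - rewrite Rmin_left, Rmax_right in Hc by lra.
    assert (df c < 0) by (apply Hs; lra). nra.
Qed.

(** * Normalised regular variation *)

Ltac fold_eta := repeat match goal with
  |- context [Derive (fun x0 : R => ?f x0)] => change (fun x0 : R => f x0) with f end.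

Definition elasticity (f : R -> R) (y : R) : R := y * Derive f y / f y.

Definition pos_C1 (f : R -> R) (y : R) : Prop :=
  0 < f y /\ ex_derive f y /\ continuous (Derive f) y.

Definition nrv_on (b : R) (f : R -> R) (c : R) : Prop :=
  (forall y, b < y -> pos_C1 f y) /\
  is_lim (elasticity f) p_infty c.

Lemma nrv_on_pos b f c y : nrv_on b f c -> b < y -> 0 < f y.
Proof. intros [Hf _] Hy. apply Hf, Hy. Qed.

Lemma nrv_on_le b b' f c : nrv_on b f c -> b <= b' -> nrv_on b' f c.
Proof. intros [H1 H2] Hb; split; auto. intros y Hy; apply H1; lra. Qed.

Lemma nrv_on_index_eq b f c c' : nrv_on b f c -> c = c' -> nrv_on b f c'.
Proof. intros H ->; auto. Qed.

Lemma pos_C1_ext f h y : locally y (fun z => f z = h z) -> pos_C1 f y -> pos_C1 h y.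
Proof.
  intros Hl (Hp & Hd & Hc).
  assert (Hy : f y = h y) by apply (locally_singleton _ _ Hl).
  repeat split.
  - rewrite <- Hy; exact Hp.
  - eapply ex_derive_ext_loc; [exact Hl|exact Hd].
  - eapply continuous_ext_loc; [|exact Hc].
    apply locally_locally in Hl. eapply filter_imp; [|exact Hl].
    intros z Hz. apply Derive_ext_loc, Hz.
Qed.

Lemma nrv_on_ext b f h c : nrv_on b f c -> (forall y, b < y -> f y = h y) -> nrv_on b h c.
Proof.
  intros [H1 H2] He.
  assert (Hl : forall y, b < y -> locally y (fun z => f z = h z)).
  { intros y Hy. eapply filter_imp; [|apply (locally_gt b y Hy)]. auto. }
  split.
  - intros y Hy. apply (pos_C1_ext f); auto.
  - eapply is_lim_ext_loc; [|exact H2]. exists b. intros y Hy. unfold elasticity.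
    rewrite (Derive_ext_loc _ _ _ (Hl y Hy)), He; auto.
Qed.

Lemma nrv_on_mul b f g c1 c2 : nrv_on b f c1 -> nrv_on b g c2 ->
  nrv_on b (fun y => f y * g y) (c1 + c2).
Proof.
  intros [F1 F2] [G1 G2].
  assert (HD : forall y, b < y -> Derive (fun y => f y * g y) y =
                                Derive f y * g y + f y * Derive g y).
  { intros y Hy. apply Derive_mult; [apply F1|apply G1]; auto. }
  split.
  - intros y Hy. destruct (F1 y Hy) as (Fp & Fd & Fc). destruct (G1 y Hy) as (Gp & Gd & Gc).
    repeat split.
    + apply Rmult_lt_0_compat; auto.
    + apply ex_derive_mult; auto.
    + eapply continuous_ext_loc.
      { eapply filter_imp; [|apply (locally_gt b y Hy)]. intros z Hz. symmetry. apply HD; auto. }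
      apply cont_plus; apply cont_mult; auto; apply ex_derive_continuous_R; auto.
  - apply (is_lim_ext_loc (fun y => elasticity f y + elasticity g y)).
    { exists b. intros y Hy. unfold elasticity. rewrite (HD y Hy).
      destruct (F1 y Hy) as (Fp & _). destruct (G1 y Hy) as (Gp & _).
      field. lra. }
    apply (lim_plus (F:=Rbar_locally' p_infty)); auto.
Qed.

Lemma nrv_on_inv b f c : nrv_on b f c -> nrv_on b (fun y => / f y) (- c).
Proof.
  intros [F1 F2].
  assert (HD : forall y, b < y -> Derive (fun y => / f y) y = (- Derive f y) * / (f y * f y)).
  { intros y Hy. destruct (F1 y Hy) as (Fp&Fd&_). rewrite Derive_inv; auto; [|lra].
    simpl. field. lra. }
  split.
  - intros y Hy. destruct (F1 y Hy) as (Fp & Fd & Fc). repeat split.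
    + apply Rinv_0_lt_compat; auto.
    + apply ex_derive_inv; auto; lra.
    + eapply continuous_ext_loc.
      { eapply filter_imp; [|apply (locally_gt b y Hy)]. intros z Hz. symmetry. apply HD; auto. }
      apply cont_mult; [apply cont_opp; auto|]. apply cont_inv.
      * apply cont_mult; apply ex_derive_continuous_R; auto.
      * apply Rgt_not_eq. apply Rmult_lt_0_compat; auto.
  - apply (is_lim_ext_loc (fun y => - elasticity f y)).
    { exists b. intros y Hy. unfold elasticity. rewrite (HD y Hy).
      destruct (F1 y Hy) as (Fp & _). field. lra. }
    apply (lim_opp (F:=Rbar_locally' p_infty)); auto.
Qed.

Lemma nrv_on_sqrt b f c : nrv_on b f c -> nrv_on b (fun y => sqrt (f y)) (c / 2).
Proof.
  intros [F1 F2].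
  assert (HD : forall y, b < y ->
    Derive (fun y => sqrt (f y)) y = Derive f y * / (2 * sqrt (f y))).
  { intros y Hy. destruct (F1 y Hy) as (Fp&Fd&_). apply is_derive_unique.
    auto_derive; [repeat split; auto|]. rewrite Rmult_1_l; reflexivity. }
  split.
  - intros y Hy. destruct (F1 y Hy) as (Fp & Fd & Fc). repeat split.
    + apply sqrt_lt_R0; auto.
    + auto_derive. repeat split; auto.
    + eapply continuous_ext_loc.
      { eapply filter_imp; [|apply (locally_gt b y Hy)]. intros z Hz. symmetry. apply HD; auto. }
      apply cont_mult; auto. apply cont_inv.
      * apply cont_mult; [apply continuous_const|].
        apply continuous_sqrt_comp, ex_derive_continuous_R; auto.
      * apply Rgt_not_eq. apply Rmult_lt_0_compat; [lra|]. apply sqrt_lt_R0; auto.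
  - apply (is_lim_ext_loc (fun y => elasticity f y * / 2)).
    { exists b. intros y Hy. unfold elasticity. rewrite (HD y Hy).
      destruct (F1 y Hy) as (Fp & _).
      assert (Hs : 0 < sqrt (f y)) by (apply sqrt_lt_R0; auto).
      assert (E : sqrt (f y) * sqrt (f y) = f y) by (apply sqrt_sqrt; lra).
      set (s := sqrt (f y)) in *. rewrite <- E. field. lra. }
    apply (lim_mult (F:=Rbar_locally' p_infty)); auto. apply lim_const.
Qed.

Lemma nrv_on_Rpower c : nrv_on 0 (fun y => Rpower y c) c.
Proof.
  assert (HD : forall y, 0 < y -> Derive (fun y => Rpower y c) y = c * exp (c * ln y) * / y).
  { intros y Hy. apply is_derive_unique. unfold Rpower. auto_derive; auto. field. lra. }
  split.
  - intros y Hy. repeat split.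
    + apply exp_pos.
    + unfold Rpower. auto_derive. auto.
    + eapply continuous_ext_loc.
      { eapply filter_imp; [|apply (locally_gt 0 y Hy)]. intros z Hz. symmetry. apply HD; auto. }
      apply ex_derive_continuous_R. auto_derive. repeat split; auto; lra.
  - apply (is_lim_ext_loc (fun y => c)).
    { exists 0. intros y Hy. unfold elasticity. rewrite (HD y Hy). unfold Rpower.
      assert (0 < exp (c * ln y)) by apply exp_pos. field. lra. }
    apply (lim_const (F:=Rbar_locally' p_infty)).
Qed.

Lemma nrv_on_Rpower_mul b h c c' : nrv_on b h c' ->
  nrv_on (Rmax b 0) (fun y => Rpower y c * h y) (c + c').
Proof.
  intros H. apply nrv_on_mul.
  - eapply nrv_on_le; [apply nrv_on_Rpower|apply Rmax_r].
  - eapply nrv_on_le; [exact H|apply Rmax_l].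
Qed.

Lemma NSV_on_nrv_on B L : NSV_on B L -> nrv_on B L 0.
Proof.
  intros (H1 & H2 & H3). split; [|exact H3].
  intros y Hy. destruct (H2 y Hy). split; auto.
Qed.

Lemma nrv_on_NSV_on b f : nrv_on b f 0 -> NSV_on b f.
Proof.
  intros [H1 H2]. split; [intros; apply H1; auto|]. split; [|exact H2].
  intros u Hu; destruct (H1 u Hu) as (_&A&B); auto.
Qed.

Lemma NRV_nrv_on c F : NRV c F -> exists b, 0 <= b /\ nrv_on b F c.
Proof.
  intros (B & L & HL & HF). exists (Rmax B 0). split; [apply Rmax_r|].
  apply (nrv_on_index_eq _ _ (c + 0)); [|ring].
  eapply nrv_on_ext; [apply nrv_on_Rpower_mul, NSV_on_nrv_on, HL|].
  intros y Hy. symmetry. apply HF. generalize (Rmax_l B 0). lra.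
Qed.

Lemma nrv_on_NRV b f c : nrv_on b f c -> NRV c f.
Proof.
  intros Hf. exists (Rmax b 0), (fun u => Rpower u (- c) * f u). split.
  - apply nrv_on_NSV_on. apply (nrv_on_index_eq _ _ (- c + c)); [|ring].
    apply nrv_on_Rpower_mul, Hf.
  - intros u Hu. assert (0 < u) by (generalize (Rmax_r b 0); lra).
    rewrite <- Rmult_assoc, <- Rpower_plus, Rplus_opp_r, Rpower_O; [ring|lra].
Qed.

Lemma elasticity_le_nonincr (f : R -> R) u0 d : 0 < u0 ->
  (forall y, u0 <= y -> 0 < f y /\ ex_derive f y) ->
  (forall y, u0 <= y -> elasticity f y <= d) ->
  forall y, u0 <= y -> f y * Rpower y (-d) <= f u0 * Rpower u0 (-d).
Proof.
  intros Hu Hf HL y Hy.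
  apply (nonincr_of_derive_nonpos (fun z => f z * Rpower z (-d))
     (fun z => f z * Rpower z (-d) * (elasticity f z - d) / z)); auto.
  - intros x Hx. destruct (Hf x (proj1 Hx)) as (Hp & Hd).
    unfold Rpower. auto_derive. { repeat split; auto; lra. }
    fold_eta. unfold elasticity. field. lra.
  - intros x Hx. destruct (Hf x (proj1 Hx)) as (Hp & Hd).
    assert (elasticity f x - d <= 0) by (generalize (HL x (proj1 Hx)); lra).
    assert (0 < f x * Rpower x (-d)) by (apply Rmult_lt_0_compat; auto; apply Rpower_pos).
    unfold Rdiv. apply Rmult_le_0_r; [|left; apply Rinv_0_lt_compat; lra].
    apply Rmult_le_0_l; lra.
Qed.

Lemma nrv_on_upper_bound b f c eps : nrv_on b f c -> 0 < eps ->
  exists M, forall y, M < y -> f y <= Rpower y (c + eps).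
Proof.
  intros [F1 F2] He.
  destruct (is_lim_eventually_ball _ _ (eps/2) F2) as [M0 HM0]; [lra|].
  set (u0 := Rmax (M0 + 1) (Rmax (b + 1) 1)).
  assert (Hu : M0 < u0 /\ b < u0 /\ 0 < u0).
  { unfold u0. generalize (Rmax_l (M0+1) (Rmax (b+1) 1)) (Rmax_r (M0+1) (Rmax (b+1) 1))
      (Rmax_l (b+1) 1) (Rmax_r (b+1) 1). lra. }
  assert (Hf : forall y, u0 <= y -> 0 < f y /\ ex_derive f y).
  { intros y Hy. destruct (F1 y) as (A1&A2&_); [lra|]; auto. }
  assert (HL : forall y, u0 <= y -> elasticity f y <= c + eps/2).
  { intros y Hy. generalize (HM0 y ltac:(lra)). intros H; apply Rabs_def2 in H; lra. }
  set (C := f u0 * Rpower u0 (-(c + eps/2))).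
  destruct (is_lim_eventually_gt _ C (is_lim_Rpower_p_infty (eps/2) ltac:(lra))) as [M1 HM1].
  exists (Rmax u0 M1). intros y Hy. apply Rmax_Rlt in Hy as [Hy0 Hy1].
  assert (Hbound := elasticity_le_nonincr f u0 (c + eps/2) ltac:(lra) Hf HL y ltac:(lra)).
  fold C in Hbound. assert (HC := HM1 y Hy1).
  assert (Hsplit : forall d, f y = f y * Rpower y (- d) * Rpower y d).
  { intros d. rewrite Rmult_assoc, <- Rpower_plus, Rplus_opp_l, Rpower_O by lra. ring. }
  rewrite (Hsplit (c + eps/2)).
  replace (c + eps) with (c + eps/2 + eps/2) by field. rewrite (Rpower_plus (c + eps/2) (eps/2) y).
  assert (P := Rpower_pos y (c + eps/2)).
  apply Rle_trans with (C * Rpower y (c + eps/2)); [apply Rmult_le_compat_r; lra|nra].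
Qed.

Lemma nrv_on_lower_bound b f c eps : nrv_on b f c -> 0 < eps ->
  exists M, forall y, M < y -> Rpower y (c - eps) <= f y.
Proof.
  intros Hf He. destruct (nrv_on_upper_bound _ _ _ eps (nrv_on_inv _ _ _ Hf) He) as [M HM].
  exists (Rmax M b). intros y Hy. apply Rmax_Rlt in Hy as [HyM Hyb].
  assert (Hp : 0 < f y) by (apply Hf; auto).
  assert (Hi := HM y HyM).
  replace (c - eps) with (- (- c + eps)) by ring. rewrite Rpower_Ropp.
  rewrite <- (Rinv_inv (f y)). apply Rinv_le_contravar; [apply Rinv_0_lt_compat|]; auto.
Qed.

Lemma nrv_on_lim_0 b f c : nrv_on b f c -> c < 0 -> is_lim f p_infty 0.
Proof.
  intros Hf Hc. destruct (nrv_on_upper_bound b f c (- c / 2) Hf ltac:(lra)) as [M HM].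
  apply (is_lim_le_le_loc (fun _ => 0) (fun y => Rpower y (- (- c / 2)))).
  - exists (Rmax M b). intros y Hy. apply Rmax_Rlt in Hy as [HyM Hyb].
    split; [left; apply Hf; auto|].
    replace (- (- c / 2)) with (c + - c / 2) by field. apply HM, HyM.
  - apply is_lim_const.
  - apply is_lim_Rpower_neg. lra.
Qed.

Lemma nrv_on_ln_ratio b f c : nrv_on b f c -> is_lim (fun u => ln (f u) / ln u) p_infty c.
Proof.
  intros Hf. apply is_lim_of_eps. intros eps He.
  destruct (nrv_on_upper_bound b f c eps Hf He) as [M1 HM1].
  destruct (nrv_on_lower_bound b f c eps Hf He) as [M2 HM2].
  exists (Rmax (Rmax M1 M2) 1). intros y Hy.
  apply Rmax_Rlt in Hy as [Hy Hy1]. apply Rmax_Rlt in Hy as [HyM1 HyM2].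
  assert (Hl : 0 < ln y) by (rewrite <- ln_1; apply ln_increasing; lra).
  assert (Hp := Rpower_pos y (c - eps)).
  assert (A := ln_le _ _ Hp (HM2 y HyM2)).
  assert (B := ln_le _ _ (Rlt_le_trans _ _ _ Hp (HM2 y HyM2)) (HM1 y HyM1)).
  rewrite ln_Rpower in A, B.
  assert (Er : ln (f y) = ln (f y) / ln y * ln y) by (field; lra).
  set (r := ln (f y) / ln y) in *.
  apply Rabs_le. split; nra.
Qed.

(** * Tail integrals *)

Lemma cauchy_mvt (f1 f2 d1 d2 : R -> R) x y : x < y ->
  (forall z, x <= z <= y -> is_derive f1 z (d1 z) /\ is_derive f2 z (d2 z)) ->
  exists c, x <= c <= y /\ d1 c * (f2 y - f2 x) = d2 c * (f1 y - f1 x).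
Proof.
  intros Hxy Hd.
  destruct (MVT_gen (fun z => (f2 y - f2 x) * f1 z - (f1 y - f1 x) * f2 z) x y
    (fun z => (f2 y - f2 x) * d1 z - (f1 y - f1 x) * d2 z)) as (c & Hc & Heq).
  - intros z Hz. rewrite Rmin_left, Rmax_right in Hz by lra.
    destruct (Hd z ltac:(lra)) as (A1 & A2).
    apply is_derive_minus_R; apply is_derive_scal; auto.
  - intros z Hz. rewrite Rmin_left, Rmax_right in Hz by lra.
    destruct (Hd z ltac:(lra)) as (A1 & A2).
    apply continuity_pt_minus; apply continuity_pt_scal; eapply is_derive_continuity_pt; eauto.
  - rewrite Rmin_left, Rmax_right in Hc by lra. exists c. split; [exact Hc|].
    apply (Rmult_eq_reg_r (y - x)); [|lra].
    transitivity (((f2 y - f2 x) * d1 c - (f1 y - f1 x) * d2 c) * (y - x) +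
                  d2 c * (f1 y - f1 x) * (y - x)); [ring|].
    rewrite <- Heq. ring.
Qed.

Lemma lhopital_p_infty (f1 f2 d1 d2 : R -> R) M (l : R) :
  (forall y, M < y -> is_derive f1 y (d1 y) /\ is_derive f2 y (d2 y) /\ d2 y < 0) ->
  is_lim f1 p_infty 0 -> is_lim f2 p_infty 0 ->
  is_lim (fun y => d1 y / d2 y) p_infty l ->
  is_lim (fun y => f1 y / f2 y) p_infty l.
Proof.
  intros Hd H1 H2 H3.
  assert (Hdec : forall x w, M < x -> x < w -> f2 w < f2 x).
  { intros x w Hx Hw. apply (decr_of_derive_neg f2 d2); auto; intros z Hz; apply Hd; lra. }
  assert (Hpos : forall x, M < x -> 0 < f2 x).
  { intros x Hx. assert (f2 (x+1) < f2 x) by (apply Hdec; lra).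
    assert (0 <= f2 (x+1)); [|lra].
    apply (is_lim_le_const f2 0 (f2 (x+1))); [|exact H2].
    exists (x+1); intros w Hw; left; apply Hdec; lra. }
  apply is_lim_of_eps. intros eps He.
  destruct (is_lim_eventually_ball _ _ eps H3 He) as [M1 HM1].
  exists (Rmax M M1). intros x Hx. apply Rmax_Rlt in Hx as [HxM HxM1].
  assert (Hr : forall y, x < y -> Rabs ((f1 y - f1 x) / (f2 y - f2 x) - l) < eps).
  { intros y Hy.
    destruct (cauchy_mvt f1 f2 d1 d2 x y Hy) as (c & Hc & Heq).
    { intros z Hz. destruct (Hd z ltac:(lra)) as (A1 & A2 & _); auto. }
    destruct (Hd c ltac:(lra)) as (_ & _ & Hd2).
    assert (f2 y - f2 x < 0) by (generalize (Hdec x y HxM Hy); lra).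
    replace ((f1 y - f1 x) / (f2 y - f2 x)) with (d1 c / d2 c)
      by (field_simplify_eq; lra).
    apply HM1. lra. }
  assert (Hlim : is_lim (fun y => (f1 y - f1 x) / (f2 y - f2 x)) p_infty (f1 x / f2 x)).
  { assert (Hp := Hpos x HxM).
    replace (f1 x / f2 x) with ((0 - f1 x) / (0 - f2 x)) by (field; lra).
    apply (lim_div (F:=Rbar_locally' p_infty)); [lra| |];
      apply (lim_plus (F:=Rbar_locally' p_infty)); auto; apply lim_const. }
  apply Rabs_le. split.
  - cut (l - eps <= f1 x / f2 x); [lra|].
    eapply is_lim_ge_const; [|exact Hlim].
    exists x; intros y Hy; generalize (Hr y Hy); intros Q; apply Rabs_def2 in Q; lra.
  - cut (f1 x / f2 x <= l + eps); [lra|].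
    eapply is_lim_le_const; [|exact Hlim].
    exists x; intros y Hy; generalize (Hr y Hy); intros Q; apply Rabs_def2 in Q; lra.
Qed.

Lemma ex_RInt_of_continuous_on b (f : R -> R) u v :
  (forall x, b < x -> continuous f x) -> b < u -> b < v -> ex_RInt f u v.
Proof.
  intros H Hu Hv. apply (ex_RInt_continuous (V:=R_CompleteNormedModule)). intros z Hz. apply H.
  destruct (Rle_dec u v); [rewrite Rmin_left in Hz|rewrite Rmin_right in Hz]; lra.
Qed.

Lemma is_derive_RInt_upper b (f : R -> R) a z : (forall x, b < x -> continuous f x) ->
  b < a -> b < z -> is_derive (fun t => RInt f a t) z (f z).
Proof.
  intros H Ha Hz. apply (is_derive_RInt (V:=R_NormedModule) f (RInt f a) a z).
  - eapply filter_imp; [|apply (locally_gt b z Hz)]. intros w Hw.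
    apply (RInt_correct (V:=R_CompleteNormedModule)). eapply ex_RInt_of_continuous_on; eauto.
  - apply H; auto.
Qed.

Lemma is_RInt_gen_primitive {Fa Fb : (R -> Prop) -> Prop} {FFa : Filter Fa} {FFb : Filter Fb}
  (f P : R -> R) (D : R -> Prop) (la lb : R) :
  (forall x, D x -> locally x D) ->
  (forall x, D x -> is_derive P x (f x) /\ continuous f x) ->
  filter_prod Fa Fb (fun ab => forall x, Rmin (fst ab) (snd ab) <= x <= Rmax (fst ab) (snd ab) -> D x) ->
  filterlim P Fa (locally la) -> filterlim P Fb (locally lb) ->
  is_RInt_gen f Fa Fb (lb - la).
Proof.
  intros HDo HP Hab Ha Hb.
  assert (HDP : forall x, D x -> Derive P x = f x)
    by (intros x Hx; apply is_derive_unique, HP, Hx).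
  eapply is_RInt_gen_ext; [|apply (is_RInt_gen_Derive P la lb); auto].
  - eapply filter_imp; [|exact Hab]. intros ab Hx x Hx'. apply HDP, Hx. lra.
  - eapply filter_imp; [|exact Hab]. intros ab Hx x Hx'. eexists. apply HP, Hx, Hx'.
  - eapply filter_imp; [|exact Hab]. intros ab Hx x Hx'.
    apply (continuous_ext_loc _ f); [|apply HP, Hx, Hx'].
    eapply filter_imp; [|apply HDo, Hx, Hx']. intros w Hw. symmetry. apply HDP, Hw.
Qed.

Lemma nrv_on_id_mul b f c : 0 <= b -> nrv_on b f c -> nrv_on b (fun y => y * f y) (1 + c).
Proof.
  intros Hb Hf. eapply nrv_on_ext.
  - eapply nrv_on_le; [apply (nrv_on_Rpower_mul b f 1 c), Hf|]. rewrite Rmax_left; lra.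
  - intros y Hy. simpl. rewrite Rpower_1 by lra. reflexivity.
Qed.

Lemma elasticity_lt_of_lim b f c c' : nrv_on b f c -> c < c' ->
  exists M, b < M /\ forall y, M < y -> elasticity f y < c'.
Proof.
  intros [_ Hl] Hc. destruct (is_lim_eventually_ball _ _ (c' - c) Hl ltac:(lra)) as [M HM].
  exists (Rmax M b + 1). split; [generalize (Rmax_r M b); lra|].
  intros y Hy. generalize (HM y ltac:(generalize (Rmax_l M b); lra)).
  intros Q. apply Rabs_def2 in Q. lra.
Qed.

Lemma is_derive_nrv_on b f c y : nrv_on b f c -> b < y -> 0 < y ->
  is_derive f y (f y * elasticity f y / y).
Proof.
  intros [Hf _] Hy Hy0. destruct (Hf y Hy) as (Hp & Hd & _).
  replace (f y * elasticity f y / y) with (Derive f y)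
    by (unfold elasticity; field; lra).
  apply Derive_correct, Hd.
Qed.

Definition tail (f : R -> R) (y : R) : R := RInt_gen f (at_point y) (Rbar_locally p_infty).

Section TailIntegral.
Variables (b alpha : R) (f : R -> R).
Hypotheses (Hb : 0 <= b) (Halpha : 1 < alpha) (Hf : nrv_on b f (- alpha)).

Let Hpos y : b < y -> 0 < f y.
Proof. intros Hy. apply Hf, Hy. Qed.

Let Hcont x : b < x -> continuous f x.
Proof. intros Hx. apply ex_derive_continuous_R, Hf, Hx. Qed.

Let Hid : nrv_on b (fun y => y * f y) (1 + - alpha).
Proof. apply nrv_on_id_mul; auto. Qed.

Lemma RInt_tail_le : exists M, b < M /\
  forall u v, M < u -> u <= v -> RInt f u v <= 2 / (alpha - 1) * (u * f u).
Proof.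
  set (k := 2 / (alpha - 1)). assert (Hk : 0 < k) by (unfold k; apply Rdiv_lt_0_compat; lra).
  destruct (elasticity_lt_of_lim _ _ _ (- ((alpha - 1) / 2)) Hid ltac:(lra)) as (M & HMb & HM).
  exists M. split; [exact HMb|]. intros u v Hu Huv.
  (* [RInt f u z + k z f z] is nonincreasing in [z] because [k * elasticity < -1]. *)
  assert (H := nonincr_of_derive_nonpos (fun z => RInt f u z + k * (z * f z))
     (fun z => f z + k * (z * f z * elasticity (fun y => y * f y) z / z)) u v Huv).
  simpl in H. rewrite RInt_point in H. change (zero : R) with 0 in H.
  assert (0 <= k * (v * f v)).
  { assert (0 < f v) by (apply Hpos; lra). apply Rmult_le_pos; [lra|]. apply Rmult_le_pos; lra. }
  cut (RInt f u v + k * (v * f v) <= 0 + k * (u * f u)); [lra|]. apply H.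
  - intros x Hx. apply is_derive_plus_R.
    + apply (is_derive_RInt_upper b); auto; lra.
    + apply is_derive_scal, (is_derive_nrv_on b (fun y => y * f y) (1 + - alpha)); auto; lra.
  - intros x Hx. assert (0 < f x) by (apply Hpos; lra).
    assert (Hel := HM x ltac:(lra)).
    replace (f x + k * (x * f x * elasticity (fun y => y * f y) x / x))
      with (f x * (1 + k * elasticity (fun y => y * f y) x)) by (field; lra).
    assert (k * elasticity (fun y => y * f y) x < -1).
    { apply Rlt_le_trans with (k * (- ((alpha - 1) / 2))).
      - apply Rmult_lt_compat_l; auto.
      - unfold k. right. field. lra. }
    nra.
Qed.

Lemma RInt_tail_cvg : exists c0,
  filterlim (fun v => RInt f (b + 1) v) (Rbar_locally p_infty) (locally c0).
Proof.
  destruct RInt_tail_le as (M & HMb & Htail).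
  assert (Hid0 := nrv_on_lim_0 _ _ _ Hid ltac:(lra)).
  set (k := 2 / (alpha - 1)). assert (Hk : 0 < k) by (unfold k; apply Rdiv_lt_0_compat; lra).
  assert (Hnn : forall u v, b < u -> u <= v -> 0 <= RInt f u v).
  { intros u v Hu Huv. apply RInt_ge_0; auto.
    - eapply ex_RInt_of_continuous_on; eauto; lra.
    - intros x Hx. left. apply Hpos. lra. }
  assert (Ech : forall p q, b < p -> b < q -> RInt f (b + 1) q - RInt f (b + 1) p = RInt f p q).
  { intros p q Hp Hq. rewrite <- (RInt_Chasles f (b + 1) p q).
    - change (plus ?a ?b') with (a + b'). ring.
    - eapply ex_RInt_of_continuous_on; eauto; lra.
    - eapply ex_RInt_of_continuous_on; eauto. }
  apply (proj1 (filterlim_locally_cauchy (U:=R_CompleteSpace) (F := Rbar_locally p_infty)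
    (fun v => RInt f (b + 1) v))).
  intros eps.
  destruct (is_lim_eventually_ball _ 0 (eps / k) Hid0) as [M3 HM3].
  { apply Rdiv_lt_0_compat; auto. apply cond_pos. }
  assert (Hke : forall w, M3 < w -> k * (w * f w) < eps).
  { intros w Hw. generalize (HM3 w Hw). rewrite Rminus_0_r. intros Q.
    apply Rabs_def2 in Q. destruct Q as [Q _].
    apply Rlt_le_trans with (k * (eps / k)); [apply Rmult_lt_compat_l; auto|].
    right; field; lra. }
  exists (fun v => Rmax M M3 < v). split; [exists (Rmax M M3); auto|].
  intros u v Hu Hv. apply Rmax_Rlt in Hu as [Hu1 Hu3]. apply Rmax_Rlt in Hv as [Hv1 Hv3].
  change (Rabs (RInt f (b + 1) v - RInt f (b + 1) u) < eps).
  destruct (Rle_dec u v) as [Huv|Hvu].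
  - rewrite Ech, Rabs_right by (try apply Rle_ge, Hnn; lra).
    generalize (Htail u v Hu1 Huv) (Hke u Hu3); fold k; lra.
  - rewrite <- Rabs_Ropp, Ropp_minus_distr, Ech, Rabs_right by (try apply Rle_ge, Hnn; lra).
    generalize (Htail v u Hv1 ltac:(lra)) (Hke v Hv3); fold k; lra.
Qed.

Lemma tail_primitive : exists c0,
  filterlim (fun v => RInt f (b + 1) v) (Rbar_locally p_infty) (locally c0) /\
  forall y, b < y ->
  tail f y = c0 - RInt f (b + 1) y /\
  is_RInt_gen f (at_point y) (Rbar_locally p_infty) (c0 - RInt f (b + 1) y).
Proof.
  destruct RInt_tail_cvg as [c0 Hc0]. exists c0. split; [exact Hc0|]. intros y Hy.
  assert (HI : is_RInt_gen f (at_point y) (Rbar_locally p_infty) (c0 - RInt f (b + 1) y)).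
  { apply (is_RInt_gen_primitive f (RInt f (b + 1)) (fun x => b < x)); auto.
    - intros x Hx. apply locally_gt, Hx.
    - intros x Hx. split; [apply (is_derive_RInt_upper b); auto; lra|auto].
    - apply (Filter_prod _ _ _ (fun a => a = y) (fun z => y < z)); [reflexivity|exists y; auto|].
      intros a z -> Hz x Hx. simpl in Hx. rewrite Rmin_left, Rmax_right in Hx; lra.
    - intros P HP. exact (locally_singleton _ _ HP). }
  split; [apply is_RInt_gen_unique, HI|exact HI].
Qed.

Lemma is_RInt_gen_tail y : b < y ->
  is_RInt_gen f (at_point y) (Rbar_locally p_infty) (tail f y).
Proof. intros Hy. destruct tail_primitive as (c0 & Hc0 & H). rewrite (proj1 (H y Hy)). apply H, Hy. Qed.

Lemma is_derive_tail y : b < y -> is_derive (tail f) y (- f y).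
Proof.
  intros Hy. destruct tail_primitive as (c0 & Hc0 & H).
  apply (is_derive_ext_loc (fun z => c0 - RInt f (b + 1) z)).
  { eapply filter_imp; [|apply (locally_gt b y Hy)]. intros z Hz. symmetry; apply H, Hz. }
  replace (- f y) with (0 - f y) by ring. apply is_derive_minus_R.
  - apply (is_derive_const (K:=R_AbsRing) (V:=R_NormedModule)).
  - apply (is_derive_RInt_upper b); auto; lra.
Qed.

Lemma is_lim_tail : is_lim (tail f) p_infty 0.
Proof.
  destruct tail_primitive as (c0 & Hc0 & H).
  apply (is_lim_ext_loc (fun y => c0 + - RInt f (b + 1) y)).
  { exists b. intros y Hy. symmetry. apply H, Hy. }
  replace (Finite 0) with (Finite (c0 + - c0)) by (f_equal; ring).
  apply (lim_plus (F:=Rbar_locally' p_infty)); [apply lim_const|].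
  apply (lim_opp (F:=Rbar_locally' p_infty)), Hc0.
Qed.

Lemma tail_decr y w : b < y -> y < w -> tail f w < tail f y.
Proof.
  intros Hy Hw. apply (decr_of_derive_neg (tail f) (fun z => - f z)); auto.
  - intros x Hx. apply is_derive_tail. lra.
  - intros x Hx. assert (0 < f x) by (apply Hpos; lra). lra.
Qed.

Lemma tail_pos y : b < y -> 0 < tail f y.
Proof.
  intros Hy. assert (tail f (y + 1) < tail f y) by (apply tail_decr; lra).
  assert (0 <= tail f (y + 1)); [|lra].
  apply (is_lim_le_const (tail f) 0 (tail f (y + 1))); [|exact is_lim_tail].
  exists (y + 1). intros w Hw. left. apply tail_decr; lra.
Qed.

Lemma is_lim_tail_ratio : is_lim (fun y => tail f y / (y * f y)) p_infty (/ (alpha - 1)).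
Proof.
  destruct (elasticity_lt_of_lim _ _ _ 0 Hid ltac:(lra)) as (M & HMb & HM).
  apply (lhopital_p_infty (tail f) (fun y => y * f y) (fun y => - f y)
    (fun y => y * f y * elasticity (fun y => y * f y) y / y) M).
  - intros y Hy. assert (0 < f y) by (apply Hpos; lra).
    split; [apply is_derive_tail; lra|]. split; [apply (is_derive_nrv_on b (fun y => y * f y) (1 + - alpha)); auto; lra|].
    replace (y * f y * elasticity (fun y => y * f y) y / y)
      with (f y * elasticity (fun y => y * f y) y) by (field; lra).
    generalize (HM y Hy). nra.
  - exact is_lim_tail.
  - apply (nrv_on_lim_0 _ _ _ Hid). lra.
  - apply (is_lim_ext_loc (fun y => - / elasticity (fun y => y * f y) y)).
    { exists M. intros y Hy. assert (0 < f y) by (apply Hpos; lra).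
      generalize (HM y Hy); intros. field. repeat split; lra. }
    replace (/ (alpha - 1)) with (- / (1 + - alpha)) by (field; lra).
    apply (lim_opp (F:=Rbar_locally' p_infty)).
    apply (lim_inv (F:=Rbar_locally' p_infty)); [lra|]. apply Hid.
Qed.

End TailIntegral.

(** * Inverse of a decreasing tail integral *)

Lemma is_derive_diff_quot (f : R -> R) x l : is_derive f x l ->
  filterlim (fun h => (f (x + h) - f x) / h) (locally' 0) (locally l).
Proof.
  intros H. apply is_derive_Reals in H. intros P [eps HP].
  destruct (H eps (cond_pos eps)) as [d Hd]. exists d. intros h Hh Hne.
  apply HP. apply Hd; auto. change (Rabs (h - 0) < d) in Hh. rewrite Rminus_0_r in Hh; auto.
Qed.

Lemma diff_quot_is_derive (f : R -> R) x l :
  filterlim (fun h => (f (x + h) - f x) / h) (locally' 0) (locally l) -> is_derive f x l.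
Proof.
  intros H. apply is_derive_Reals. intros eps Heps.
  destruct (H (fun z => Rabs (z - l) < eps)) as [d Hd].
  { exists (mkposreal eps Heps); intros; auto. }
  exists d. intros h Hh0 Hh. apply Hd; auto. change (Rabs (h - 0) < d). rewrite Rminus_0_r; auto.
Qed.

Lemma locally'_neq (x : R) : locally' x (fun h => h <> x).
Proof. exists (mkposreal 1 Rlt_0_1); intros; auto. Qed.

Section Inversion.
Variables (y0 beta : R) (G g H K : R -> R).
Hypotheses
  (Hbeta : 0 < beta)
  (HG : forall y, y0 < y -> is_derive G y (- g y) /\ 0 < g y)
  (HG0 : is_lim G p_infty 0)
  (HH : forall t, 0 < t < beta -> is_derive H t (K t) /\ 0 < K t)
  (HHG : forall t, 0 < t < beta -> 0 < H t < G (y0 + 1)).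

Definition inverse_comp (t : R) : R :=
  epsilon (inhabits 0) (fun y => y0 + 1 < y /\ G y = H t).

Let Phi := inverse_comp.

Let G_decr p q : y0 < p -> p < q -> G q < G p.
Proof.
  intros Hp Hq. apply (decr_of_derive_neg G (fun z => - g z)); auto.
  - intros x Hx; apply HG; lra.
  - intros x Hx. destruct (HG x ltac:(lra)). lra.
Qed.

Let inverse_pos y : y0 < y -> 0 < G y.
Proof.
  intros Hy. assert (G (y + 1) < G y) by (apply G_decr; lra).
  assert (0 <= G (y + 1)); [|lra].
  apply (is_lim_le_const G 0 (G (y + 1))); [|exact HG0].
  exists (y + 1). intros w Hw. left. apply G_decr; lra.
Qed.

Let H_incr p q : 0 < p -> p < q -> q < beta -> H p < H q.
Proof.
  intros Hp Hq Hb. assert (- H q < - H p); [|lra].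
  apply (decr_of_derive_neg (fun z => - H z) (fun z => - K z)); auto.
  - intros x Hx. apply (is_derive_opp (K:=R_AbsRing) (V:=R_NormedModule) H). apply HH; lra.
  - intros x Hx. destruct (HH x ltac:(lra)). lra.
Qed.

Let H_inj p q : 0 < p < beta -> 0 < q < beta -> p <> q -> H p <> H q.
Proof.
  intros Hp Hq Hpq. destruct (Rtotal_order p q) as [Q|[Q|Q]]; [|lra|].
  - apply Rlt_not_eq, H_incr; lra.
  - apply Rgt_not_eq, H_incr; lra.
Qed.

Lemma inverse_comp_spec t : 0 < t < beta -> y0 + 1 < Phi t /\ G (Phi t) = H t.
Proof.
  intros Ht. unfold Phi, inverse_comp. apply epsilon_spec.
  assert (Gc : forall y, y0 < y -> continuity_pt (fun y => - G y) y).
  { intros y Hy. apply continuity_pt_opp. eapply is_derive_continuity_pt, HG, Hy. }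
  destruct (IVT_Rbar_incr (fun y => - G y) (y0 + 1) p_infty (- G (y0 + 1)) 0 (- H t))
    as [x (Hx1 & Hx2 & Hx3)].
  - apply (is_lim_continuity (fun y => - G y)), Gc. lra.
  - replace (Finite 0) with (Finite (- 0)) by (f_equal; ring).
    apply (lim_opp (F:=Rbar_locally' p_infty)). exact HG0.
  - intros x Hx _. apply Gc. simpl in Hx. lra.
  - simpl; auto.
  - simpl. destruct (HHG t Ht). lra.
  - exists x. simpl in Hx1. split; lra.
Qed.

Let G_nonincr p q : y0 < p -> p <= q -> G q <= G p.
Proof.
  intros Hp Hq. destruct (Req_dec p q) as [->|Hne]; [lra|]. left. apply G_decr; lra.
Qed.

Lemma inverse_comp_unique t y : 0 < t < beta -> y0 < y -> G y = H t -> y = Phi t.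
Proof.
  intros Ht Hy HGy. destruct (inverse_comp_spec t Ht) as [HP HGP].
  destruct (Rtotal_order y (Phi t)) as [Q|[Q|Q]]; auto; exfalso.
  - assert (G (Phi t) < G y) by (apply G_decr; lra). lra.
  - assert (G y < G (Phi t)) by (apply G_decr; lra). lra.
Qed.

Lemma inverse_comp_continuous t : 0 < t < beta -> continuous Phi t.
Proof.
  intros Ht. destruct (inverse_comp_spec t Ht) as [Hy HGy]. set (y := Phi t) in *.
  intros P [eps HP]. set (e := Rmin eps ((y - y0) / 2)).
  assert (He : 0 < e /\ e <= eps /\ e <= (y - y0) / 2).
  { unfold e. split; [apply Rmin_pos; [apply cond_pos|lra]|split; [apply Rmin_l|apply Rmin_r]]. }
  assert (A1 : G (y + e) < H t) by (rewrite <- HGy; apply G_decr; lra).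
  assert (A2 : H t < G (y - e)) by (rewrite <- HGy; apply G_decr; lra).
  assert (HcH : continuous H t) by (apply ex_derive_continuous_R; eexists; apply HH, Ht).
  assert (Hnear : locally t (fun s => (0 < s < beta) /\ G (y + e) < H s < G (y - e))).
  { apply filter_and; [apply locally_between, Ht|].
    apply (HcH (fun z => G (y + e) < z < G (y - e))), locally_between. lra. }
  change (locally t (fun s => P (Phi s))).
  eapply filter_imp; [|exact Hnear]. intros s [Hs HHs]. apply HP.
  destruct (inverse_comp_spec s Hs) as [Hps HGs].
  change (Rabs (Phi s - y) < eps). apply Rabs_def1.
  - apply Rnot_le_lt. intros Q. assert (G (Phi s) <= G (y + e)) by (apply G_nonincr; lra).
    lra.
  - apply Rnot_le_lt. intros Q. assert (G (y - e) <= G (Phi s)) by (apply G_nonincr; lra).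
    lra.
Qed.

Let near_interior t : 0 < t < beta -> locally' 0 (fun h => 0 < t + h < beta).
Proof.
  intros Ht. exists (mkposreal (Rmin t (beta - t)) ltac:(apply Rmin_pos; lra)).
  intros h Hh _. change (Rabs (h - 0) < Rmin t (beta - t)) in Hh. rewrite Rminus_0_r in Hh.
  generalize (Rmin_l t (beta - t)) (Rmin_r t (beta - t)); intros.
  apply Rabs_def2 in Hh. lra.
Qed.

Let inverse_comp_increment t : 0 < t < beta ->
  filterlim (fun h => Phi (t + h) - Phi t) (locally' 0) (locally' 0).
Proof.
  intros Ht. destruct (inverse_comp_spec t Ht) as [_ HGt].
  (* The increment vanishes only at [h = 0] since [H] is injective and [G o Phi = H]. *)
  assert (Hne : locally' 0 (fun h => Phi (t + h) - Phi t <> 0)).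
  { eapply filter_imp; [|apply (filter_and _ _ (near_interior t Ht) (locally'_neq 0))].
    intros h [Hh Hh0] Hk. destruct (inverse_comp_spec (t + h) Hh) as [_ E].
    replace (Phi (t + h)) with (Phi t) in E by lra. rewrite HGt in E.
    apply (H_inj t (t + h)); lra. }
  intros P [d Hd]. change (locally' 0 (fun h => P (Phi (t + h) - Phi t))).
  destruct (inverse_comp_continuous t Ht (fun z => Rabs (z - Phi t) < d)) as [e He].
  { exists d. auto. }
  assert (Hball : locally' 0 (fun h => ball t e (t + h))).
  { exists e. intros h Hh _. change (Rabs (t + h - t) < e).
    replace (t + h - t) with (h - 0) by ring. exact Hh. }
  eapply filter_imp; [|exact (filter_and _ _ Hne Hball)]. intros h [Hk Hb].
  apply Hd; [|exact Hk]. change (Rabs (Phi (t + h) - Phi t - 0) < d).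
  rewrite Rminus_0_r. apply He, Hb.
Qed.

Lemma is_derive_inverse_comp t : 0 < t < beta -> is_derive Phi t (- K t / g (Phi t)).
Proof.
  intros Ht. destruct (inverse_comp_spec t Ht) as [Hy HGy].
  destruct (HH t Ht) as [HdH HK]. destruct (HG (Phi t) ltac:(lra)) as [HdG Hg].
  set (y := Phi t) in *. apply diff_quot_is_derive.
  set (k := fun h => Phi (t + h) - y).
  assert (Hk0 : filterlim k (locally' 0) (locally' 0)) by apply inverse_comp_increment, Ht.
  assert (HB : filterlim (fun h => (G (y + k h) - G y) / k h) (locally' 0) (locally (- g y))).
  { apply (filterlim_comp _ _ _ k (fun z => (G (y + z) - G y) / z) _ (locally' 0)); auto.
    apply is_derive_diff_quot. auto. }
  assert (Hgn : - g y <> 0) by lra.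
  assert (HQ := lim_div (F:=locally' 0) _ _ _ _ Hgn (is_derive_diff_quot H t (K t) HdH) HB).
  replace (- K t / g y) with (K t / - g y) by (field; lra).
  eapply lim_ext; [|exact HQ].
  assert (Hkne : locally' 0 (fun h => k h <> 0)) by exact (Hk0 (fun z => z <> 0) (locally'_neq 0)).
  eapply filter_imp;
    [|apply (filter_and _ _ (near_interior t Ht) (filter_and _ _ Hkne (locally'_neq 0)))].
  intros h (Hh & Hkn & Hh0).
  destruct (inverse_comp_spec (t + h) Hh) as [_ E].
  replace (y + k h) with (Phi (t + h)) by (unfold k; ring).
  rewrite E, <- HGy. unfold k in *. fold y. field. split; [auto|split; [auto|]].
  rewrite HGy. apply Rminus_eq_contra, H_inj; lra.
Qed.

Hypothesis HH0 : filterlim H (at_right 0) (locally 0).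

Lemma inverse_comp_lim : filterlim Phi (at_right 0) (Rbar_locally p_infty).
Proof.
  intros P [M HM]. change (at_right 0 (fun t => P (Phi t))).
  set (Y := Rmax M (y0 + 1) + 1).
  assert (HY : M < Y /\ y0 + 1 < Y) by (unfold Y; generalize (Rmax_l M (y0 + 1)) (Rmax_r M (y0 + 1)); lra).
  assert (HGY : 0 < G Y) by (apply inverse_pos; lra).
  assert (E : at_right 0 (fun t => Rabs (H t - 0) < G Y)).
  { apply (HH0 (fun z => Rabs (z - 0) < G Y)). exists (mkposreal (G Y) HGY). intros z Hz; exact Hz. }
  eapply filter_imp; [|exact (filter_and _ _ E (at_right_lt beta Hbeta))].
  intros t [Ht1 Ht2]. apply HM. destruct (inverse_comp_spec t Ht2) as [Hp1 Hp2].
  rewrite Rminus_0_r in Ht1. apply Rabs_def2 in Ht1.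
  apply Rnot_le_lt. intros Q. assert (G Y <= G (Phi t)) by (apply G_nonincr; lra). lra.
Qed.

Hypotheses
  (Hg1 : forall y, y0 < y -> ex_derive g y /\ continuous (Derive g) y)
  (HK1 : forall t, 0 < t < beta -> ex_derive K t /\ continuous (Derive K) t).

Let DPhi t := - K t / g (Phi t).
Let D2Phi t := - (Derive K t * g (Phi t) - K t * (Derive g (Phi t) * DPhi t)) /
               (g (Phi t) * g (Phi t)).

Lemma Derive_inverse_comp t : 0 < t < beta -> Derive Phi t = - K t / g (Phi t).
Proof. intros Ht. apply is_derive_unique, is_derive_inverse_comp, Ht. Qed.

Let Derive_Phi_loc t : 0 < t < beta -> locally t (fun s => Derive Phi s = DPhi s).
Proof.
  intros Ht. eapply filter_imp; [|apply locally_between, Ht]. intros s Hs.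
  apply Derive_inverse_comp, Hs.
Qed.

Let is_derive_DPhi t : 0 < t < beta -> is_derive DPhi t (D2Phi t).
Proof.
  intros Ht. destruct (HK1 t Ht) as [[dK HdK] _]. destruct (HH t Ht) as [_ HKp].
  destruct (inverse_comp_spec t Ht) as [Hy _].
  destruct (HG (Phi t) ltac:(lra)) as [_ Hgp]. destruct (Hg1 (Phi t) ltac:(lra)) as [Hgd _].
  assert (HdP := is_derive_inverse_comp t Ht).
  unfold DPhi. auto_derive.
  - repeat split; try (eexists; eassumption); auto; lra.
  - fold_eta. unfold D2Phi, DPhi.
    rewrite (is_derive_unique _ _ _ HdP), (is_derive_unique _ _ _ HdK). field. lra.
Qed.

Lemma Derive2_inverse_comp t : 0 < t < beta -> Derive (Derive Phi) t = D2Phi t.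
Proof.
  intros Ht. rewrite (Derive_ext_loc _ _ _ (Derive_Phi_loc t Ht)).
  apply is_derive_unique, is_derive_DPhi, Ht.
Qed.

Lemma inverse_comp_C2 : C2_on 0 (Finite beta) Phi.
Proof.
  intros t Ht0 Htb. simpl in Htb. assert (Ht : 0 < t < beta) by lra.
  split; [eexists; apply is_derive_inverse_comp, Ht|]. split.
  - eapply ex_derive_ext_loc; [|eexists; apply is_derive_DPhi, Ht].
    eapply filter_imp; [|apply Derive_Phi_loc, Ht]. intros s Hs. symmetry. exact Hs.
  - apply (continuous_ext_loc _ D2Phi).
    { eapply filter_imp; [|apply locally_between, Ht]. intros s Hs.
      symmetry. apply Derive2_inverse_comp, Hs. }
    destruct (HK1 t Ht) as [HKd HKc]. destruct (HH t Ht) as [_ HKp].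
    destruct (inverse_comp_spec t Ht) as [Hy _].
    destruct (HG (Phi t) ltac:(lra)) as [_ Hgp]. destruct (Hg1 (Phi t) ltac:(lra)) as [Hgd HgDc].
    assert (HPc := inverse_comp_continuous t Ht).
    assert (cg : continuous (fun s => g (Phi s)) t)
      by (apply (continuous_comp Phi g); [|apply ex_derive_continuous_R]; auto).
    assert (cDg : continuous (fun s => Derive g (Phi s)) t)
      by (apply (continuous_comp Phi (Derive g)); auto).
    assert (cK := ex_derive_continuous_R _ _ HKd).
    assert (cDPhi : continuous DPhi t).
    { unfold DPhi, Rdiv. apply cont_mult; [apply cont_opp; auto|]. apply cont_inv; auto; lra. }
    unfold D2Phi, Rdiv. apply cont_mult.
    + apply cont_opp, (continuous_minus (K:=R_AbsRing) (V:=R_NormedModule)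
        (fun s => Derive K s * g (Phi s)) (fun s => K s * (Derive g (Phi s) * DPhi s))).
      * apply cont_mult; auto.
      * apply cont_mult; [|apply cont_mult]; auto.
    + apply cont_inv; [apply cont_mult; auto|]. apply Rgt_not_eq, Rmult_lt_0_compat; lra.
Qed.

End Inversion.

Lemma Derive_Rinv_comp f u : 0 < u -> ex_derive f (/ u) ->
  Derive (fun v => f (/ v)) u = - Derive f (/ u) / (u * u).
Proof.
  intros Hu Hd. apply is_derive_unique. auto_derive; [repeat split; auto; lra|].
  fold_eta. field. lra.
Qed.

Lemma pos_C1_Rinv_comp (D : R -> Prop) f x :
  locally x (fun u => 0 < u /\ D (/ u)) -> (forall u, D u -> pos_C1 f u) ->
  pos_C1 (fun u => f (/ u)) x.
Proof.
  intros Hl Hf. destruct (locally_singleton _ _ Hl) as [Hx HDx].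
  destruct (Hf _ HDx) as (Hp & Hd & Hc). repeat split; auto.
  - auto_derive. repeat split; auto; lra.
  - apply (continuous_ext_loc _ (fun u => - Derive f (/ u) / (u * u))).
    { eapply filter_imp; [|exact Hl]. intros u [Hu HDu]. symmetry.
      apply Derive_Rinv_comp; auto. apply Hf, HDu. }
    unfold Rdiv. apply cont_mult.
    + apply cont_opp, (continuous_comp Rinv (Derive f)); auto. apply continuous_Rinv. lra.
    + apply cont_inv; [apply cont_mult; apply continuous_id|]. apply Rgt_not_eq, Rmult_lt_0_compat; lra.
Qed.

Lemma elasticity_Rinv_comp f u : 0 < u -> pos_C1 f (/ u) ->
  elasticity (fun v => f (/ v)) u = - elasticity f (/ u).
Proof.
  intros Hu (Hp & Hd & _). unfold elasticity. rewrite Derive_Rinv_comp by auto. field. lra.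
Qed.

Lemma nrv_on_Rinv_arg b K c : 0 < b -> nrv_on b (fun v => K (/ v)) c ->
  (forall t, 0 < t < / b -> pos_C1 K t) /\
  filterlim (elasticity K) (at_right 0) (locally (- c)).
Proof.
  intros Hb [HQ Hl].
  assert (HKinv : forall t, 0 < t -> locally t (fun u => K (/ / u) = K u)).
  { intros t Ht. eapply filter_imp; [|apply (locally_gt 0 t Ht)].
    intros u Hu. rewrite Rinv_inv. reflexivity. }
  assert (HK : forall t, 0 < t < / b -> pos_C1 K t).
  { intros t Ht. apply (pos_C1_ext (fun u => K (/ / u))); [apply HKinv; lra|].
    apply (pos_C1_Rinv_comp (fun v => b < v) (fun v => K (/ v))); auto.
    eapply filter_imp; [|apply locally_between, Ht]. intros u Hu.
    split; [lra|]. apply Rinv_lt_of_lt_Rinv; auto. }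
  split; [exact HK|].
  apply (lim_ext (fun t => - elasticity (fun v => K (/ v)) (/ t))).
  - eapply filter_imp; [|apply (at_right_lt (/ b)), Rinv_0_lt_compat, Hb]. intros t Ht.
    assert (Hbt := Rinv_lt_of_lt_Rinv b t Hb Ht).
    rewrite <- elasticity_Rinv_comp by (try apply HQ; lra).
    unfold elasticity. rewrite Rinv_inv. do 2 f_equal. apply Derive_ext_loc, HKinv. lra.
  - apply lim_opp. eapply filterlim_comp; [apply filterlim_Rinv_0_right|exact Hl].
Qed.

Lemma nrv_on_of_elasticity_at_0 beta f c : 0 < beta ->
  (forall t, 0 < t < beta -> pos_C1 f t) ->
  filterlim (elasticity f) (at_right 0) (locally c) ->
  nrv_on (/ beta) (fun u => f (/ u)) (- c).
Proof.
  intros Hb Hf Hl.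
  assert (Hinv : forall u, / beta < u -> 0 < u /\ 0 < / u < beta).
  { intros u Hu. assert (0 < / beta) by (apply Rinv_0_lt_compat; lra).
    split; [lra|]. split; [apply Rinv_0_lt_compat; lra|].
    rewrite <- (Rinv_inv beta). apply Rinv_lt_contravar; [|lra]. apply Rmult_lt_0_compat; lra. }
  split.
  - intros u Hu. apply (pos_C1_Rinv_comp (fun t => 0 < t < beta)); auto.
    eapply filter_imp; [|apply (locally_gt (/ beta) u Hu)]. intros w Hw. apply Hinv, Hw.
  - apply (is_lim_ext_loc (fun u => - elasticity f (/ u))).
    + exists (/ beta). intros u Hu. destruct (Hinv u Hu) as [Hu0 Hu1].
      symmetry. apply elasticity_Rinv_comp; auto.
    + apply (lim_opp (F := Rbar_locally' p_infty)).
      eapply filterlim_comp; [apply filterlim_Rinv_p_infty_right|exact Hl].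
Qed.

Section IteratedLogarithms.
Context {T : Type} {F : (T -> Prop) -> Prop} {FF : Filter F}.

(* [ln P - ln Q = ln (P / Q)] stays bounded while [ln Q -> +oo]. *)
Lemma ln_ratio_lim (P Q : T -> R) c : 0 < c ->
  filterlim (fun x => P x / Q x) F (locally c) -> filterlim Q F (Rbar_locally p_infty) ->
  filterlim (fun x => ln (P x) / ln (Q x)) F (locally 1).
Proof.
  intros Hc HPQ HQ.
  assert (HlnQ : filterlim (fun x => ln (Q x)) F (Rbar_locally p_infty))
    by (eapply filterlim_comp; [exact HQ|apply is_lim_ln_p]).
  assert (H1 : filterlim (fun x => ln (P x / Q x)) F (locally (ln c)))
    by (eapply filterlim_comp; [exact HPQ|apply continuous_ln; auto]).
  assert (H2 : filterlim (fun x => / ln (Q x)) F (locally 0)).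
  { eapply filterlim_comp; [exact HlnQ|]. apply (filterlim_Rbar_inv p_infty). discriminate. }
  assert (H3 := lim_plus _ _ _ _ (lim_mult _ _ _ _ H1 H2) (lim_const 1)).
  replace (ln c * 0 + 1) with 1 in H3 by ring.
  eapply lim_ext; [|exact H3].
  assert (E1 : F (fun x => c / 2 < P x / Q x)).
  { apply HPQ. exists (mkposreal (c/2) ltac:(lra)). intros z Hz.
    change (Rabs (z - c) < c / 2) in Hz. apply Rabs_def2 in Hz. lra. }
  assert (E2 : F (fun x => 1 < Q x)) by (apply HQ; exists 1; auto).
  assert (E3 : F (fun x => 1 < ln (Q x))) by (apply HlnQ; exists 1; auto).
  eapply filter_imp; [|exact (filter_and _ _ E1 (filter_and _ _ E2 E3))].
  intros x (A & B & C).
  assert (E : ln (P x) = ln (P x / Q x) + ln (Q x))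
    by (rewrite <- ln_mult by lra; f_equal; field; lra).
  cbn beta. rewrite E. field. lra.
Qed.

Lemma log_iter_ratio_lim (P Q : T -> R) a : 0 < a ->
  filterlim (fun x => ln (P x) / ln (Q x)) F (locally a) ->
  filterlim (fun x => ln (Q x)) F (Rbar_locally p_infty) ->
  forall m : nat, (1 <= m)%nat ->
  filterlim (fun x => log_iter m (P x) / log_iter m (Q x)) F
    (locally (if Nat.eqb m 1 then a else 1)).
Proof.
  intros Ha HPQ HQ m Hm. destruct m as [|n]; [lia|]. clear Hm.
  cut (filterlim (fun x => log_iter (S n) (P x) / log_iter (S n) (Q x)) F
         (locally (if Nat.eqb (S n) 1 then a else 1)) /\
       filterlim (fun x => log_iter (S n) (Q x)) F (Rbar_locally p_infty)); [tauto|].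
  induction n as [|n [IH1 IH2]]; [split; assumption|].
  split.
  - apply (ln_ratio_lim (fun x => log_iter (S n) (P x)) (fun x => log_iter (S n) (Q x))
      (if Nat.eqb (S n) 1 then a else 1)); auto.
    destruct n; simpl; lra.
  - apply (filterlim_comp _ _ _ (fun x => log_iter (S n) (Q x)) ln F (Rbar_locally p_infty));
      [exact IH2|apply is_lim_ln_p].
Qed.

End IteratedLogarithms.

Lemma le_Rpower_of_derive_le (LL D : R -> R) a p : 0 < a -> 0 < p ->
  (forall y, a <= y -> is_derive LL y (D y) /\ y * D y <= Rpower y p) ->
  exists M, forall y, M < y -> LL y <= Rpower y (2 * p).
Proof.
  intros Ha Hp HD.
  set (C := LL a - Rpower a p / p).
  assert (HLL : forall y, a <= y -> LL y <= C + Rpower y p / p).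
  { intros y Hy. cut (LL y - Rpower y p / p <= LL a - Rpower a p / p); [unfold C; lra|].
    apply (nonincr_of_derive_nonpos (fun z => LL z - Rpower z p / p)
      (fun z => D z - Rpower z p / z)); auto.
    - intros x Hx. apply is_derive_minus_R; [apply HD; lra|].
      unfold Rpower. auto_derive; [lra|]. field. lra.
    - intros x Hx. destruct (HD x ltac:(lra)) as [_ Hle].
      cut (D x <= Rpower x p / x); [lra|].
      apply (Rmult_le_reg_l x); [lra|]. replace (x * (Rpower x p / x)) with (Rpower x p)
        by (field; lra). exact Hle. }
  destruct (is_lim_eventually_gt _ (Rmax (Rmax (2 / p) (2 * Rabs C)) 1)
    (is_lim_Rpower_p_infty p Hp)) as [MZ HMZ].
  exists (Rmax MZ a). intros y Hy. apply Rmax_Rlt in Hy as [HyZ Hya].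
  set (z := Rpower y p). assert (Hz := HMZ y HyZ). fold z in Hz.
  apply Rmax_Rlt in Hz as [Hz Hz1]. apply Rmax_Rlt in Hz as [Hz2 HzC].
  replace (Rpower y (2 * p)) with (z * z) by (unfold z; rewrite <- Rpower_plus; f_equal; ring).
  assert (z / p <= z * z / 2).
  { replace (z / p) with (2 / p * z / 2) by (field; lra). nra. }
  assert (C <= z * z / 2) by (generalize (Rle_abs C); nra).
  generalize (HLL y ltac:(lra)). fold z. lra.
Qed.

Lemma slowly_growing_ratio b (LL D : R -> R) : 0 <= b -> nrv_on b D (-1) ->
  (forall y, b < y -> is_derive LL y (D y)) -> is_lim LL p_infty p_infty ->
  forall p, 0 < p -> exists M, forall y, M < y ->
    0 < D y /\ 0 < LL y / (y * D y) <= Rpower y p.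
Proof.
  intros Hb HD HLLd HLL p Hp. set (q := p / 3).
  assert (HyD : nrv_on b (fun y => y * D y) 0)
    by (apply (nrv_on_index_eq _ _ (1 + -1)); [apply nrv_on_id_mul|ring]; auto).
  destruct (nrv_on_upper_bound _ _ _ q HyD ltac:(unfold q; lra)) as [M1 HM1].
  destruct (nrv_on_lower_bound _ _ _ q HyD ltac:(unfold q; lra)) as [M2 HM2].
  destruct (le_Rpower_of_derive_le LL D (Rmax (Rmax M1 b) 1 + 1) q) as [M3 HM3];
    [generalize (Rmax_r (Rmax M1 b) 1); lra|unfold q; lra| |].
  { intros y Hy. generalize (Rmax_l (Rmax M1 b) 1) (Rmax_l M1 b) (Rmax_r M1 b); intros.
    split; [apply HLLd; lra|]. rewrite <- (Rplus_0_l q). apply HM1. lra. }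
  destruct (is_lim_eventually_gt LL 0 HLL) as [M4 HM4].
  exists (Rmax (Rmax M2 M3) (Rmax M4 b)). intros y Hy.
  apply Rmax_Rlt in Hy as [Hy Hy']. apply Rmax_Rlt in Hy as [HyM2 HyM3].
  apply Rmax_Rlt in Hy' as [HyM4 Hyb].
  assert (HyDp : 0 < y * D y) by (apply HyD; auto).
  assert (HLLp := HM4 y HyM4).
  split; [apply (nrv_on_pos _ _ _ _ HD Hyb)|]. split; [apply Rdiv_lt_0_compat; auto|].
  assert (Hl := HM2 y HyM2). rewrite Rminus_0_l, Rpower_Ropp in Hl.
  replace (Rpower y p) with (Rpower y (2 * q) * Rpower y q)
    by (rewrite <- Rpower_plus; f_equal; unfold q; field).
  unfold Rdiv. apply Rmult_le_compat; [lra|left; apply Rinv_0_lt_compat; auto|apply HM3; auto|].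
  rewrite <- (Rinv_inv (Rpower y q)). apply Rinv_le_contravar; [apply Rinv_0_lt_compat, Rpower_pos|exact Hl].
Qed.

(** * Asymptotics of the solution *)

(* Substituting [s = 1 / v] turns [int_0^t K] into the tail integral of
   [inv_density K] from [1 / t]. *)
Definition inv_density (K : R -> R) (v : R) : R := K (/ v) / (v * v).

Section Asymptotics.
Variables (alpha theta b : R) (g K : R -> R).
Hypotheses (Halpha : 1 < alpha) (Htheta : 0 <= theta) (Hb : 1 <= b)
  (Hg : nrv_on b g (- alpha)) (HK : nrv_on b (fun v => K (/ v)) (- theta)).

Lemma nrv_on_inv_density : nrv_on b (inv_density K) (- (theta + 2)).
Proof.
  apply (nrv_on_index_eq _ _ (- theta + Ropp 2)); [|ring].
  eapply nrv_on_ext.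
  - apply nrv_on_mul; [exact HK|]. eapply nrv_on_le; [apply nrv_on_Rpower|lra].
  - intros v Hv. unfold inv_density. rewrite Rpower_m2 by lra. reflexivity.
Qed.

Let H t := tail (inv_density K) (/ t).

Let Hb_inv t : 0 < t < / b -> b < / t.
Proof. apply Rinv_lt_of_lt_Rinv. lra. Qed.

Let HKC1 : forall t, 0 < t < / b -> pos_C1 K t.
Proof. apply (nrv_on_Rinv_arg b K (- theta)); [lra|exact HK]. Qed.

Lemma is_derive_head t : 0 < t < / b -> is_derive H t (K t).
Proof.
  intros Ht. unfold H.
  replace (K t) with (scal (- / (t * t)) (- inv_density K (/ t))).
  - apply (is_derive_comp (tail (inv_density K)) Rinv).
    + apply (is_derive_tail b (theta + 2)); [lra|lra|apply nrv_on_inv_density|apply Hb_inv, Ht].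
    + auto_derive; lra.
  - unfold inv_density. rewrite !Rinv_inv. change (scal ?a ?c) with (a * c).
    match goal with |- ?l = ?r => change (@eq R l r) end. field. lra.
Qed.

Lemma head_pos t : 0 < t < / b -> 0 < H t.
Proof.
  intros Ht. apply (tail_pos b (theta + 2)); [lra|lra|apply nrv_on_inv_density|apply Hb_inv, Ht].
Qed.

Lemma head_lim : filterlim H (at_right 0) (locally 0).
Proof.
  apply (filterlim_comp _ _ _ Rinv (tail (inv_density K)) _ (Rbar_locally p_infty));
    [apply filterlim_Rinv_0_right|].
  apply (is_lim_tail b (theta + 2)); [lra|lra|apply nrv_on_inv_density].
Qed.

Lemma is_RInt_gen_head t : 0 < t < / b -> is_RInt_gen K (at_right 0) (at_point t) (H t).
Proof.
  intros Ht. rewrite <- (Rminus_0_r (H t)).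
  apply (is_RInt_gen_primitive K H (fun s => 0 < s < / b)).
  - intros x Hx. apply locally_between, Hx.
  - intros x Hx. split; [apply is_derive_head, Hx|]. apply ex_derive_continuous_R, HKC1, Hx.
  - apply (Filter_prod _ _ _ (fun a => 0 < a < t) (fun z => z = t)); [apply at_right_lt; lra|reflexivity|].
    intros a z Ha ->. simpl. intros x Hx. rewrite Rmin_left, Rmax_right in Hx; lra.
  - exact head_lim.
  - intros P HP. exact (locally_singleton _ _ HP).
Qed.

Lemma head_ratio : filterlim (fun t => H t / (t * K t)) (at_right 0) (locally (/ (theta + 1))).
Proof.
  replace (theta + 1) with (theta + 2 - 1) by ring.
  eapply lim_ext; [|apply (filterlim_comp _ _ _ Rinv
    (fun y => tail (inv_density K) y / (y * inv_density K y)) _ (Rbar_locally p_infty));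
    [apply filterlim_Rinv_0_right|]].
  2: apply (is_lim_tail_ratio b (theta + 2)); [lra|lra|apply nrv_on_inv_density].
  eapply filter_imp; [|apply (at_right_lt 1); lra]. intros t Ht.
  unfold H, inv_density. rewrite Rinv_inv. f_equal. field. lra.
Qed.

Lemma exists_beta : exists beta, 0 < beta <= / b /\
  forall t, 0 < t < beta -> 0 < H t < tail g (b + 1).
Proof.
  assert (HG : 0 < tail g (b + 1)) by (apply (tail_pos b alpha); auto; lra).
  destruct (head_lim (fun z => Rabs (z - 0) < tail g (b + 1))) as [e He].
  { exists (mkposreal _ HG). intros z Hz. exact Hz. }
  assert (Hbi : 0 < / b) by (apply Rinv_0_lt_compat; lra).
  exists (Rmin e (/ b)). split; [split; [apply Rmin_pos; auto; apply cond_pos|apply Rmin_r]|].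
  intros t Ht. generalize (Rmin_l e (/ b)) (Rmin_r e (/ b)); intros.
  split; [apply head_pos; lra|].
  assert (Hh := He t ltac:(change (Rabs (t - 0) < e); rewrite Rminus_0_r, Rabs_right; lra) ltac:(lra)).
  rewrite Rminus_0_r in Hh. apply Rabs_def2 in Hh. lra.
Qed.

Variable beta : R.
Hypotheses (Hbeta : 0 < beta) (Hbeta_b : beta <= / b)
  (HHG : forall t, 0 < t < beta -> 0 < H t < tail g (b + 1)).

Let Phi := inverse_comp b (tail g) H.

Let Htb t : 0 < t < beta -> 0 < t < / b.
Proof. lra. Qed.

Let HG y : b < y -> is_derive (tail g) y (- g y) /\ 0 < g y.
Proof. intros Hy. split; [apply (is_derive_tail b alpha)|apply Hg]; auto; lra. Qed.

Let HG0 : is_lim (tail g) p_infty 0.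
Proof. apply (is_lim_tail b alpha); auto; lra. Qed.

Let HH t : 0 < t < beta -> is_derive H t (K t) /\ 0 < K t.
Proof. intros Ht. split; [apply is_derive_head|apply HKC1]; auto. Qed.

Lemma Phi_spec t : 0 < t < beta -> b + 1 < Phi t /\ tail g (Phi t) = H t.
Proof. apply inverse_comp_spec with (beta := beta) (g := g); auto. Qed.

Lemma Phi_derive t : 0 < t < beta -> Derive Phi t = - K t / g (Phi t).
Proof. apply Derive_inverse_comp with (beta := beta); auto. Qed.

Lemma Phi_lim : filterlim Phi (at_right 0) (Rbar_locally p_infty).
Proof. apply inverse_comp_lim with (beta := beta) (g := g); auto. apply head_lim. Qed.

Lemma Phi_C2 : C2_on 0 (Finite beta) Phi.
Proof.
  apply inverse_comp_C2 with (g := g) (K := K); auto.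
  - intros y Hy. apply Hg. lra.
  - intros t Ht. apply HKC1. lra.
Qed.

Lemma Phi_solves t : 0 < t < beta ->
  (exists I, is_RInt_gen g (at_point (Phi t)) (Rbar_locally p_infty) I /\
             is_RInt_gen K (at_right 0) (at_point t) I) /\
  forall y, b < y ->
  (exists I, is_RInt_gen g (at_point y) (Rbar_locally p_infty) I /\
             is_RInt_gen K (at_right 0) (at_point t) I) -> y = Phi t.
Proof.
  intros Ht. destruct (Phi_spec t Ht) as [HP HGP].
  assert (HI := is_RInt_gen_head t (Htb t Ht)).
  split.
  - exists (H t). split; [|exact HI]. rewrite <- HGP. apply (is_RInt_gen_tail b alpha); auto; lra.
  - intros y Hy [I [HI1 HI2]]. apply inverse_comp_unique with (beta := beta) (g := g); auto.
    unfold tail. rewrite (is_RInt_gen_unique _ _ HI1), <- (is_RInt_gen_unique _ _ HI2).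
    apply is_RInt_gen_unique, HI.
Qed.

Let ratio t := Phi t * g (Phi t) / (t * K t).

Lemma Phi_ratio : filterlim ratio (at_right 0) (locally ((alpha - 1) / (theta + 1))).
Proof.
  assert (HA : filterlim (fun t => Phi t * g (Phi t) / tail g (Phi t)) (at_right 0)
                 (locally (alpha - 1))).
  { apply (filterlim_comp _ _ _ Phi (fun y => y * g y / tail g y) _ (Rbar_locally p_infty));
      [exact Phi_lim|].
    replace (alpha - 1) with (/ / (alpha - 1)) by (rewrite Rinv_inv; auto).
    apply (is_lim_ext_loc (fun y => / (tail g y / (y * g y))) _ p_infty (Finite (/ / (alpha - 1)))).
    { exists b. intros y Hy. assert (0 < tail g y) by (apply (tail_pos b alpha); auto; lra).
      destruct (HG y Hy) as [_ Hgp]. field. repeat split; lra. }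
    apply (lim_inv (F:=Rbar_locally' p_infty)); [apply Rinv_neq_0_compat; lra|].
    apply (is_lim_tail_ratio b alpha); auto; lra. }
  eapply lim_ext; [|exact (lim_mult _ _ _ _ HA head_ratio)].
  eapply filter_imp; [|exact (at_right_lt beta Hbeta)]. intros t Ht.
  destruct (Phi_spec t Ht) as [_ HGP]. rewrite HGP. unfold ratio.
  assert (0 < H t) by (apply HHG, Ht). destruct (HH t Ht) as [_ HKp].
  field. repeat split; lra.
Qed.

Let a := (theta + 1) / (alpha - 1).

Lemma Phi_elasticity : filterlim (elasticity Phi) (at_right 0) (locally (- a)).
Proof.
  assert (HR : (alpha - 1) / (theta + 1) <> 0) by (apply Rgt_not_eq, Rdiv_lt_0_compat; lra).
  replace (- a) with (- / ((alpha - 1) / (theta + 1))) by (unfold a; field; lra).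
  eapply lim_ext; [|exact (lim_opp _ _ (lim_inv _ _ HR Phi_ratio))].
  eapply filter_imp; [|exact (at_right_lt beta Hbeta)]. intros t Ht.
  unfold elasticity, ratio. rewrite (Phi_derive t Ht).
  destruct (HH t Ht) as [_ HKp]. destruct (Phi_spec t Ht) as [HP _].
  destruct (HG (Phi t) ltac:(lra)) as [_ Hgp]. field. repeat split; lra.
Qed.

Lemma Phi_nrv_on : nrv_on (/ beta) (fun u => Phi (/ u)) a.
Proof.
  apply (nrv_on_index_eq _ _ (- - a)); [|ring].
  apply nrv_on_of_elasticity_at_0; [exact Hbeta| |exact Phi_elasticity].
  intros t Ht. destruct (Phi_spec t Ht) as [HP _]. split; [lra|].
  destruct (Phi_C2 t ltac:(lra) ltac:(simpl; lra)) as (Hd & Hdd & _).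
  split; [exact Hd|]. apply ex_derive_continuous_R, Hdd.
Qed.

Lemma Phi_log_iter_ratio m : (1 <= m)%nat ->
  filterlim (fun t => log_iter m (Phi t) / log_iter m (/ t)) (at_right 0)
    (Rbar_locally (if Nat.eqb m 1 then a else 1)).
Proof.
  intros Hm. cut (filterlim (fun t => log_iter m (Phi t) / log_iter m (/ t)) (at_right 0)
    (locally (if Nat.eqb m 1 then a else 1))); [destruct (Nat.eqb m 1); auto|].
  apply log_iter_ratio_lim; [unfold a; apply Rdiv_lt_0_compat; lra| | |exact Hm].
  - eapply lim_ext; [|apply (filterlim_comp _ _ _ Rinv (fun u => ln (Phi (/ u)) / ln u) _
      (Rbar_locally p_infty)); [apply filterlim_Rinv_0_right|apply nrv_on_ln_ratio with (/ beta), Phi_nrv_on]].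
    apply filter_forall. intros t. simpl. rewrite Rinv_inv. reflexivity.
  - apply (filterlim_comp _ _ _ Rinv ln _ (Rbar_locally p_infty));
      [apply filterlim_Rinv_0_right|apply is_lim_ln_p].
Qed.

Lemma Phi_second_ratio :
  filterlim (fun t => Phi t * Derive (Derive Phi) t / (Derive Phi t) ^ 2) (at_right 0)
    (locally (1 + (alpha - 1) / (theta + 1))).
Proof.
  assert (HelK := proj2 (nrv_on_Rinv_arg b K (- theta) ltac:(lra) HK)).
  assert (Helg : filterlim (fun t => elasticity g (Phi t)) (at_right 0) (locally (- alpha)))
    by (eapply filterlim_comp; [exact Phi_lim|apply Hg]).
  assert (HT := lim_plus _ _ _ _ (lim_mult _ _ _ _ (lim_opp _ _ HelK) Phi_ratio) (lim_opp _ _ Helg)).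
  replace (1 + (alpha - 1) / (theta + 1))
    with (- - - theta * ((alpha - 1) / (theta + 1)) + - - alpha) by (field; lra).
  eapply lim_ext; [|exact HT].
  eapply filter_imp; [|exact (at_right_lt beta Hbeta)]. intros t Ht.
  rewrite (Derive2_inverse_comp b beta (tail g) g H K); auto.
  2, 3: intros; apply HKC1 || apply Hg; lra.
  fold Phi. rewrite (Phi_derive t Ht).
  destruct (HH t Ht) as [_ HKp]. destruct (Phi_spec t Ht) as [HP _].
  destruct (HG (Phi t) ltac:(lra)) as [_ Hgp].
  unfold elasticity, ratio. field. repeat split; lra.
Qed.

Lemma Phi_subpower_lim (L D : R -> R) :
  (forall p, 0 < p -> exists M, forall y, M < y ->
     0 < D y /\ 0 < L y / (y * D y) <= Rpower y p) ->
  filterlim (fun t => L (Phi t) / D (Phi t) * (Phi t / (Derive Phi t) ^ 2)) (at_right 0)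
    (Rbar_locally 0).
Proof.
  intros Hw. set (w := fun y => L y / (y * D y)). assert (Ha : 0 < a) by (unfold a; apply Rdiv_lt_0_compat; lra).
  destruct (Hw (/ (a + 1)) ltac:(apply Rinv_0_lt_compat; lra)) as [M HM].
  destruct (nrv_on_upper_bound _ _ _ 1 Phi_nrv_on Rlt_0_1) as [M2 HM2].
  assert (EvM : at_right 0 (fun t => M < Phi t)) by (apply (Phi_lim (fun y => M < y)); exists M; auto).
  assert (EvM2 : at_right 0 (fun t => M2 < / t))
    by (apply (filterlim_Rinv_0_right (fun u => M2 < u)); exists M2; auto).
  assert (Hid : filterlim (fun t : R => t) (at_right 0) (locally 0)).
  { intros P [e He]. exists e. intros y Hy _. apply He. exact Hy. }
  assert (HU := lim_mult _ _ _ _ Hid (lim_mult _ _ _ _ Phi_ratio Phi_ratio)).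
  rewrite Rmult_0_l in HU.
  apply (filterlim_le_le (F := at_right 0) (fun _ => 0) _ (fun t => t * (ratio t * ratio t)));
    [|apply filterlim_const|exact HU].
  eapply filter_imp; [|exact (filter_and _ _ (at_right_lt beta Hbeta) (filter_and _ _ EvM EvM2))].
  intros t (Ht & HtM & HtM2).
  destruct (HH t Ht) as [_ HKp]. destruct (Phi_spec t Ht) as [HP _].
  destruct (HG (Phi t) ltac:(lra)) as [_ Hgp]. destruct (HM (Phi t) HtM) as (HD & Hw0 & Hw1).
  change (0 < w (Phi t)) in Hw0. change (w (Phi t) <= Rpower (Phi t) (/ (a + 1))) in Hw1.
  replace (L (Phi t) / D (Phi t) * (Phi t / Derive Phi t ^ 2))
    with (w (Phi t) * (t * t * (ratio t * ratio t)))
    by (rewrite (Phi_derive t Ht); unfold w, ratio; field; repeat split; lra).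
  (* [Phi t <= t^-(a + 1)], so [w (Phi t) <= Phi t ^ (1 / (a + 1)) <= 1 / t]. *)
  assert (HPhi : Phi t <= Rpower (/ t) (a + 1))
    by (generalize (HM2 (/ t) HtM2); rewrite Rinv_inv; auto).
  assert (Hwt : w (Phi t) <= / t).
  { apply (Rle_trans _ _ _ Hw1). rewrite <- (Rpower_1 (/ t)) by (apply Rinv_0_lt_compat; lra).
    replace 1 with ((a + 1) * / (a + 1)) at 2 by (field; lra). rewrite <- Rpower_mult.
    apply Rle_Rpower_l; [left; apply Rinv_0_lt_compat; lra|]. split; lra. }
  assert (HR : 0 <= ratio t * ratio t) by nra.
  split; [apply Rmult_le_pos; [lra|apply Rmult_le_pos; nra]|].
  replace (t * (ratio t * ratio t)) with (/ t * (t * t * (ratio t * ratio t))) by (field; lra).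
  apply Rmult_le_compat_r; [nra|exact Hwt].
Qed.

End Asymptotics.

Lemma nrv_on_integrand rho b LL Lf : 0 <= b ->
  nrv_on b (Derive LL) (-1) -> nrv_on b Lf 0 ->
  nrv_on b (integrand rho LL Lf) (- (1 + rho / 2)).
Proof.
  intros Hb HD HLf.
  apply (nrv_on_index_eq _ _ ((-1) / 2 + - ((rho + 1) / 2 + 0 / 2))); [|field].
  apply nrv_on_mul; [apply nrv_on_sqrt, HD|].
  apply nrv_on_inv, nrv_on_mul; [|apply nrv_on_sqrt, HLf].
  eapply nrv_on_le; [apply nrv_on_Rpower|exact Hb].
Qed.

Lemma common_nrv_threshold A c c' (D L Q : R -> R) :
  NRV c D -> NSV L -> NRV c' Q ->
  exists b, A <= b /\ 1 <= b /\ nrv_on b D c /\ nrv_on b L 0 /\ nrv_on b Q c'.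
Proof.
  intros HD [bL HL] HQ.
  destruct (NRV_nrv_on _ _ HD) as (bD & _ & HDr). destruct (NRV_nrv_on _ _ HQ) as (bQ & _ & HQr).
  exists (Rmax (Rmax A 1) (Rmax bD (Rmax bL bQ))).
  generalize (Rmax_l (Rmax A 1) (Rmax bD (Rmax bL bQ))) (Rmax_l A 1) (Rmax_r A 1)
    (Rmax_r (Rmax A 1) (Rmax bD (Rmax bL bQ))) (Rmax_l bD (Rmax bL bQ)) (Rmax_r bD (Rmax bL bQ))
    (Rmax_l bL bQ) (Rmax_r bL bQ). intros.
  repeat split; try lra; eapply nrv_on_le; eauto using NSV_on_nrv_on; lra.
Qed.

Theorem lemma3p1 (rho theta A : R) (LL Lf K : R -> R)
  (Hrho : 0 < rho) (Htheta : 0 <= theta)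
  (HLL : C2_on A p_infty LL)
  (HLLinf : is_lim LL p_infty p_infty)
  (HLL' : NRV (-1) (Derive LL))
  (HLf : NSV Lf)
  (HK : NRV0 theta K)
  (HKmono : theta = 0 ->
     exists d, 0 < d /\ forall s1 s2, 0 < s1 -> s1 <= s2 -> s2 < d -> K s1 <= K s2) :
  exists (beta y0 : R) (Phi : R -> R),
    0 < beta /\ A <= y0 /\
    (forall y, y0 < y -> 0 < Derive LL y /\ 0 < Lf y) /\
    (forall t, 0 < t < beta ->
       y0 < Phi t /\ defining_eq rho LL Lf K (Phi t) t /\
       (forall y, y0 < y -> defining_eq rho LL Lf K y t -> y = Phi t)) /\
    C2_on 0 (Finite beta) Phi /\
    filterlim Phi (at_right 0) (Rbar_locally p_infty) /\
    NRV0 (- (2 * (theta + 1) / rho)) Phi /\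
    (forall m : nat, (1 <= m)%nat ->
       filterlim (fun t => log_iter m (Phi t) / log_iter m (/ t)) (at_right 0)
         (Rbar_locally (if Nat.eqb m 1 then 2 * (1 + theta) / rho else 1))) /\
    filterlim (fun t => Phi t * Derive (Derive Phi) t / (Derive Phi t) ^ 2)
      (at_right 0) (Rbar_locally (1 + rho / (2 * (theta + 1)))) /\
    filterlim (fun t => LL (Phi t) / Derive LL (Phi t) * (Phi t / (Derive Phi t) ^ 2))
      (at_right 0) (Rbar_locally 0).
Proof.
  destruct (common_nrv_threshold A (-1) (- theta) (Derive LL) Lf (fun v => K (/ v)) HLL' HLf HK)
    as (b & HAb & Hb1 & HD & HLfb & HKb).
  set (alpha := 1 + rho / 2). set (g := integrand rho LL Lf).
  assert (Halpha : 1 < alpha) by (unfold alpha; lra).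
  assert (Hg : nrv_on b g (- alpha)) by (apply nrv_on_integrand; auto; lra).
  destruct (exists_beta alpha theta b g K) as (beta & [Hbeta Hbeta_b] & HHG); auto.
  set (Phi := inverse_comp b (tail g) (fun t => tail (inv_density K) (/ t))).
  assert (Ea : (theta + 1) / (alpha - 1) = 2 * (theta + 1) / rho) by (unfold alpha; field; lra).
  assert (Erho : rho / (2 * (theta + 1)) = (alpha - 1) / (theta + 1)) by (unfold alpha; field; lra).
  exists beta, b, Phi.
  split; [exact Hbeta|]. split; [exact HAb|].
  split; [intros y Hy; split; [apply (nrv_on_pos _ _ _ _ HD)|apply (nrv_on_pos _ _ _ _ HLfb)]; lra|].
  split.
  { intros t Ht. destruct (Phi_spec alpha b g K Halpha Hb1 Hg beta HHG t Ht) as [HP _].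
    split; [unfold Phi; lra|].
    exact (Phi_solves alpha theta b g K Halpha Htheta Hb1 Hg HKb beta Hbeta_b HHG t Ht). }
  split; [exact (Phi_C2 alpha theta b g K Halpha Htheta Hb1 Hg HKb beta Hbeta_b HHG)|].
  split; [exact (Phi_lim alpha theta b g K Halpha Htheta Hb1 Hg HKb beta Hbeta HHG)|].
  split; [unfold NRV0; rewrite Ropp_involutive, <- Ea; apply (nrv_on_NRV (/ beta));
          exact (Phi_nrv_on alpha theta b g K Halpha Htheta Hb1 Hg HKb beta Hbeta Hbeta_b HHG)|].
  split; [intros m Hm; rewrite (Rplus_comm 1 theta), <- Ea;
          exact (Phi_log_iter_ratio alpha theta b g K Halpha Htheta Hb1 Hg HKb beta Hbeta Hbeta_b HHG m Hm)|].
  split; [rewrite Erho;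
          exact (Phi_second_ratio alpha theta b g K Halpha Htheta Hb1 Hg HKb beta Hbeta Hbeta_b HHG)|].
  apply (Phi_subpower_lim alpha theta b g K Halpha Htheta Hb1 Hg HKb beta Hbeta Hbeta_b HHG).
  apply (slowly_growing_ratio b); auto; try lra.
  intros y Hy. apply Derive_correct, (HLL y ltac:(lra) I).
Qed.
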